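(* Let Assumptions (A1) and (A2) from the context hold and let $\gamma>0$. Consider the estimator $$\dot{\mathbf z}(t)=-\gamma\,\mathbf z(t)+\mathbf u(t),\qquad \mathbf z(t_0)=\mathbf z_0,\qquad \mathbf x(t)=\mathbf z(t)+\boldsymbol\phi(t),$$ with input $$\mathbf u(t)=-(B\otimes I_r)\,K(t)\,\mathrm{sgn}\{(B^T\otimes I_r)\mathbf x(t)\},$$ where $K(t)\in\mathbb R^{r\ell\times r\ell}$ is diagonal with diagonal entries $\kappa_j(t)$, $j\in\{1,\dots,r\ell\}$, updated by $$\dot\kappa_j(t)=|y_j(t)|,\qquad \kappa_j(t_0)\ge 1,$$ and $\mathbf y(t)=(y_1(t),\dots,y_{r\ell}(t))^T=(B^T\otimes I_r)\mathbf x(t)$. Solutions of the resulting discontinuous system are understood in the Filippov sense. Then for every initial condition $\mathbf z_0\in\mathbb R^{nr}$ the average consensus error $\tilde{\mathbf x}(t)=\mathbf x(t)-\mathbf 1_n\otimes\bar\phi(t)$ satisfies $\lim_{t\to\infty}\tilde{\mathbf x}(t)=0$.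
   Context: There are $n$ agents $v_1,\dots,v_n$ communicating over an undirected graph $\mathcal G(\mathcal V,\mathcal E)$. Each undirected edge is regarded as two distinct directed edges, so the edge set is $\mathcal E=\{e_1,\dots,e_\ell\}\subseteq\mathcal V\times\mathcal V$. The incidence matrix $B=[b_{ij}]\in\{-1,0,1\}^{n\times\ell}$ has $b_{ij}=-1$ if edge $e_j$ leaves $v_i$, $b_{ij}=1$ if $e_j$ enters $v_i$, and $0$ otherwise (so $\mathbf 1_n^TB=0$ and the Laplacian is $L=\tfrac12BB^T$). $I_r$ is the $r\times r$ identity, $\mathbf 1_n$ the all-ones vector, $\otimes$ the Kronecker product, $(\cdot)^+$ the Moore–Penrose generalized inverse, and $M=I_n-\frac1n\mathbf 1_n\mathbf 1_n^T$. For vectors, $\mathrm{sgn}\{\cdot\}$ and $|\cdot|$ act componentwise, with $\mathrm{sgn}(0)=0$. Each agent $v_i$ has a continuously differentiable reference signal $\phi_i(t)\in\mathbb R^r$; $\boldsymbol\phi(t)=(\phi_1(t)^T,\dots,\phi_n(t)^T)^T\in\mathbb R^{nr}$ and $\bar\phi(t)=\frac1n\sum_{i=1}^n\phi_i(t)=\frac1n(\mathbf 1_n^T\otimes I_r)\boldsymbol\phi(t)$. The vector $\mathbf x(t)=(x_1(t)^T,\dots,x_n(t)^T)^T$ collects the agents' estimates of $\bar\phi(t)$. (A1) The graph $\mathcal G$ is connected and undirected. (A2) There exist constants $\varphi,\dot\varphi<\infty$ such that $\sup_{t\ge 0}\|(B^T\otimes I_r)\boldsymbol\phi(t)\|_\infty\le\varphi$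 and $\sup_{t\ge0}\|(B^T\otimes I_r)\dot{\boldsymbol\phi}(t)\|_\infty\le\dot\varphi$. Equivalently, $\|\phi_i(t)-\phi_j(t)\|_\infty\le\varphi$ and $\|\dot\phi_i(t)-\dot\phi_j(t)\|_\infty\le\dot\varphi$ for all $t$ and all $(v_i,v_j)\in\mathcal E$. *)

From Stdlib Require Import Reals Lra Lia Arith.
Open Scope R_scope.

Fixpoint sumR (m : nat) (f : nat -> R) : R :=
  match m with O => 0 | S m' => sumR m' f + f m' end.
Fixpoint prodR (m : nat) (f : nat -> R) : R :=
  match m with O => 1 | S m' => prodR m' f * f m' end.

Definition vec := nat -> R.
Definition mat := nat -> nat -> R.

Definition matvec (cols : nat) (A : mat) (v : vec) : vec :=
  fun a => sumR cols (fun b => A a b * v b).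
Definition transpose (A : mat) : mat := fun a b => A b a.
Definition eye : mat := fun a b => if Nat.eqb a b then 1 else 0.
Definition ones : mat := fun _ _ => 1.
Definition kron (p q : nat) (A Bm : mat) : mat :=
  fun a b => A (a / p)%nat (b / q)%nat * Bm (a mod p)%nat (b mod q)%nat.

Definition sgnR (x : R) : R :=
  if Rlt_dec 0 x then 1 else if Rlt_dec x 0 then -1 else 0.

Definition incidence (src dst : nat -> nat) : mat :=
  fun i j => if Nat.eqb (dst j) i then 1 else if Nat.eqb (src j) i then -1 else 0.

Inductive reach (ell : nat) (src dst : nat -> nat) (i : nat) : nat -> Prop :=
| reach_refl : reach ell src dst i i
| reach_step : forall j k e, reach ell src dst i j -> (e < ell)%nat ->
    src e = j -> dst e = k -> reach ell src dst i k.

(* (A1): the edge list describes a connected undirected graph on n vertices,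
   each undirected edge being present as two distinct directed edges. *)
Definition connected_undirected (n ell : nat) (src dst : nat -> nat) : Prop :=
  (forall j, (j < ell)%nat -> (src j < n)%nat /\ (dst j < n)%nat /\ src j <> dst j) /\
  (forall j j', (j < ell)%nat -> (j' < ell)%nat -> src j = src j' -> dst j = dst j' -> j = j') /\
  (forall j, (j < ell)%nat -> exists j', (j' < ell)%nat /\ src j' = dst j /\ dst j' = src j) /\
  (forall i k, (i < n)%nat -> (k < n)%nat -> reach ell src dst i k).

(* ---------- Filippov machinery on R^D (vectors: first D coordinates) ---------- *)
Definition vdist (D : nat) (a b : vec) : R := sqrt (sumR D (fun k => (a k - b k) ^ 2)).

Definition closedD (D : nat) (C : vec -> Prop) : Prop :=
  forall d, (forall eps, eps > 0 -> exists c, C c /\ vdist D c d < eps) -> C d.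
Definition convexD (C : vec -> Prop) : Prop :=
  forall a b lam, C a -> C b -> 0 <= lam <= 1 -> C (fun k => lam * a k + (1 - lam) * b k).
Definition clconv (D : nat) (S : vec -> Prop) (d : vec) : Prop :=
  forall C, closedD D C -> convexD C -> (forall v, S v -> C v) -> C d.

Definition nullD (D : nat) (N : vec -> Prop) : Prop :=
  forall eps, eps > 0 -> exists lo hi : nat -> nat -> R,
    (forall k i, lo k i <= hi k i) /\
    (forall v, N v -> exists k, forall i, (i < D)%nat -> lo k i <= v i <= hi k i) /\
    (forall K, sumR K (fun k => prodR D (fun i => hi k i - lo k i)) <= eps).

Definition filippov_set (D : nat) (f : vec -> vec) (w d : vec) : Prop :=
  forall delta N, delta > 0 -> nullD D N ->
    clconv D (fun s => exists v, vdist D v w < delta /\ ~ N v /\ s = f v) d.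

Definition abs_cont (g : R -> R) (a b : R) : Prop :=
  forall eps, eps > 0 -> exists delta, delta > 0 /\
    forall (m : nat) (al bl : nat -> R),
      (forall k, (k < m)%nat -> a <= al k /\ al k <= bl k /\ bl k <= b) ->
      (forall k, (S k < m)%nat -> bl k <= al (S k)) ->
      sumR m (fun k => bl k - al k) < delta ->
      sumR m (fun k => Rabs (g (bl k) - g (al k))) < eps.

Definition filippov_solution (D : nat) (F : R -> vec -> vec) (t0 : R) (w : R -> vec) : Prop :=
  (forall T, T > t0 -> forall k, (k < D)%nat -> abs_cont (fun s => w s k) t0 T) /\
  exists Z : R -> Prop, nullD 1 (fun v => Z (v O)) /\
    forall t, t > t0 -> ~ Z t -> exists d : vec,
      (forall k, (k < D)%nat -> derivable_pt_lim (fun s => w s k) t (d k)) /\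
      filippov_set D (F t) (w t) d.

(* B (x) I_r : (n r) x (ell r);  B^T (x) I_r : (ell r) x (n r) *)
Definition BI (r : nat) (src dst : nat -> nat) : mat := kron r r (incidence src dst) eye.
Definition BTI (r : nat) (src dst : nat -> nat) : mat :=
  kron r r (transpose (incidence src dst)) eye.

(* state w = (z ; kappa), z in R^{nr} (indices < n r), kappa in R^{r ell}
   (index n r + j holds kappa_j). *)
Definition est_y (n r : nat) (src dst : nat -> nat) (phi : R -> vec) (t : R) (w : vec) : vec :=
  matvec (n * r) (BTI r src dst) (fun k => w k + phi t k).

Definition est_u (n r ell : nat) (src dst : nat -> nat) (phi : R -> vec) (t : R) (w : vec) : vec :=
  fun a => - matvec (ell * r) (BI r src dst)
             (fun b => w (n * r + b)%nat * sgnR (est_y n r src dst phi t w b)) a.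

Definition est_field (n r ell : nat) (src dst : nat -> nat) (gamma : R) (phi : R -> vec)
  (t : R) (w : vec) : vec :=
  fun k => if Nat.ltb k (n * r) then - gamma * w k + est_u n r ell src dst phi t w k
           else if Nat.ltb k (n * r + ell * r) then Rabs (est_y n r src dst phi t w (k - n * r)%nat)
           else 0.

Definition phibar (n r : nat) (phi : R -> vec) (t : R) : vec :=
  fun p => / INR n * matvec (n * r) (kron r r ones eye) (phi t) p.
Definition xtilde (n r : nat) (phi : R -> vec) (w : R -> vec) (t : R) : vec :=
  fun k => (w t k + phi t k) - matvec r (kron r r ones eye) (phibar n r phi t) k.

(* Fix a coordinate p < r; the estimator decouples across coordinates. Because
   1^T B = 0, the switching input does not move the sum of the z-components, which
   therefore satisfies s' = -gamma s and decays exponentially; as the consensus error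
   is the centred vector Q = x - 1 mean(x) plus this sum divided by n, it remains to
   show Q -> 0. Connectivity gives a constant C with |Q . h| <= C H sum_j |y_j| whenever
   h has edge differences at most H, so with c = C (gamma vphi + dvphi) the function
     V = |Q|^2 / 2 + sum_j (kappa_j - c)^2 / 2
   satisfies V' <= -gamma |Q|^2 almost everywhere: the switching term contributes
   -sum_j kappa_j |y_j|, the gain adaptation +sum_j (kappa_j - c) |y_j|, and the drift of
   the references at most c sum_j |y_j|. Hence V is nonincreasing and the gains are
   nondecreasing and bounded, so |Q|^2 = 2 V - sum_j (kappa_j - c)^2 converges, and its
   limit is 0 since otherwise V would decrease without bound.
   The derivative of an absolutely continuous function is turned into monotonicity by a
   covering argument, and the Filippov inclusion is exploited by testing it against
   affine functionals: their sublevel sets are closed and convex. *)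

From Stdlib Require Import Reals Lra Lia Arith Classical.
Open Scope R_scope.

Lemma sumR_ext m f g : (forall i, (i < m)%nat -> f i = g i) -> sumR m f = sumR m g.
Proof.
  induction m as [|m IH]; intros H; simpl; [reflexivity|].
  rewrite IH by (intros; apply H; lia). rewrite H by lia. reflexivity.
Qed.

Lemma sumR_plus m f g : sumR m (fun i => f i + g i) = sumR m f + sumR m g.
Proof. induction m as [|m IH]; simpl; [|rewrite IH]; lra. Qed.

Lemma sumR_minus m f g : sumR m (fun i => f i - g i) = sumR m f - sumR m g.
Proof. induction m as [|m IH]; simpl; [|rewrite IH]; lra. Qed.

Lemma sumR_scal m c f : sumR m (fun i => c * f i) = c * sumR m f.
Proof. induction m as [|m IH]; simpl; [|rewrite IH]; lra. Qed.

Lemma sumR_opp m f : - sumR m f = sumR m (fun i => - f i).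
Proof. induction m as [|m IH]; simpl; [|rewrite <- IH]; lra. Qed.

Lemma sumR_mult_r m f c : sumR m f * c = sumR m (fun i => f i * c).
Proof. induction m as [|m IH]; simpl; [|rewrite <- IH]; lra. Qed.

Lemma sumR_const m c : sumR m (fun _ => c) = INR m * c.
Proof. induction m as [|m IH]; simpl sumR; [simpl; ring|]. rewrite IH, S_INR; ring. Qed.

Lemma sumR_zero m : sumR m (fun _ => 0) = 0.
Proof. rewrite sumR_const; ring. Qed.

Lemma sumR_le m f g : (forall i, (i < m)%nat -> f i <= g i) -> sumR m f <= sumR m g.
Proof.
  induction m as [|m IH]; intros H; simpl; [lra|].
  apply Rplus_le_compat; [apply IH; intros; apply H|apply H]; lia.
Qed.

Lemma sumR_nonneg m f : (forall i, (i < m)%nat -> 0 <= f i) -> 0 <= sumR m f.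
Proof. intros H. rewrite <- (sumR_zero m). apply sumR_le; auto. Qed.

Lemma sumR_abs m f : Rabs (sumR m f) <= sumR m (fun i => Rabs (f i)).
Proof.
  induction m as [|m IH]; simpl; [rewrite Rabs_R0; lra|].
  eapply Rle_trans; [apply Rabs_triang|lra].
Qed.

Lemma sumR_term_le m f k :
  (forall i, (i < m)%nat -> 0 <= f i) -> (k < m)%nat -> f k <= sumR m f.
Proof.
  induction m as [|m IH]; simpl; intros H Hk; [lia|].
  destruct (Nat.eq_dec k m) as [->|Hne].
  - assert (0 <= sumR m f) by (apply sumR_nonneg; intros; apply H; lia). lra.
  - assert (f k <= sumR m f) by (apply IH; [intros; apply H|]; lia).
    assert (0 <= f m) by (apply H; lia). lra.
Qed.

Lemma sumR_swap m l (f : nat -> nat -> R) :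
  sumR m (fun i => sumR l (fun j => f i j)) = sumR l (fun j => sumR m (fun i => f i j)).
Proof.
  induction m as [|m IH]; simpl; [now rewrite sumR_zero|].
  rewrite IH, <- sumR_plus; reflexivity.
Qed.

Lemma sumR_split_add m l f : sumR (m + l) f = sumR m f + sumR l (fun i => f (m + i)%nat).
Proof.
  induction l as [|l IH]; simpl; [rewrite Nat.add_0_r; lra|].
  rewrite Nat.add_succ_r; simpl. rewrite IH; lra.
Qed.

Lemma sumR_split_mul m r f :
  sumR (m * r) f = sumR m (fun a => sumR r (fun q => f (a * r + q)%nat)).
Proof.
  induction m as [|m IH]; simpl; [reflexivity|].
  replace (r + m * r)%nat with (m * r + r)%nat by lia.
  rewrite sumR_split_add, IH; reflexivity.
Qed.

Lemma sumR_delta m k h :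
  (k < m)%nat -> sumR m (fun i => if Nat.eqb k i then h i else 0) = h k.
Proof.
  induction m as [|m IH]; simpl; intros Hk; [lia|].
  destruct (Nat.eq_dec k m) as [->|Hne].
  - rewrite Nat.eqb_refl, (sumR_ext m _ (fun _ => 0)), sumR_zero; [lra|].
    intros i Hi. destruct (Nat.eqb_spec m i); [lia|reflexivity].
  - destruct (Nat.eqb_spec k m); [lia|]. rewrite IH by lia. lra.
Qed.

Lemma Rabs_le_between x y : Rabs x <= y -> - y <= x <= y.
Proof. unfold Rabs; destruct Rcase_abs; lra. Qed.

Lemma vdist_coord D a b k : (k < D)%nat -> Rabs (a k - b k) <= vdist D a b.
Proof.
  intros Hk. unfold vdist. rewrite <- sqrt_Rsqr_abs. apply sqrt_le_1_alt.
  unfold Rsqr. replace ((a k - b k) * (a k - b k)) with ((a k - b k) ^ 2) by ring.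
  apply (sumR_term_le D (fun k => (a k - b k) ^ 2)); auto.
  intros; apply pow2_ge_0.
Qed.

Lemma vdist_sym D a b : vdist D a b = vdist D b a.
Proof. unfold vdist. f_equal. apply sumR_ext. intros; ring. Qed.

Lemma finite_bound_exists (P : nat -> nat -> Prop) m :
  (forall i, (i < m)%nat -> exists k, P i k) ->
  exists K, forall i, (i < m)%nat -> exists k, (k < K)%nat /\ P i k.
Proof.
  induction m as [|m IH]; intros H; [exists 0%nat; intros; lia|].
  destruct IH as [K HK]; [intros; apply H; lia|].
  destruct (H m ltac:(lia)) as [k0 Hk0].
  exists (S (Nat.max K k0)). intros i Hi. destruct (Nat.eq_dec i m) as [->|Hne].
  - exists k0; split; [lia|assumption].
  - destruct (HK i ltac:(lia)) as [k [Hk1 Hk2]]. exists k; split; [lia|assumption].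
Qed.

Lemma finite_max_exists (Q : nat -> R -> Prop) m :
  (forall i M M', M <= M' -> Q i M -> Q i M') ->
  (forall i, (i < m)%nat -> exists M, Q i M) ->
  exists M, 0 <= M /\ forall i, (i < m)%nat -> Q i M.
Proof.
  intros Hmon. induction m as [|m IH]; intros H; [exists 0; split; [lra|]; intros; lia|].
  destruct IH as [M [HM0 HM]]; [intros; apply H; lia|].
  destruct (H m ltac:(lia)) as [M1 HM1].
  exists (Rmax M M1). split; [eapply Rle_trans; [|apply Rmax_l]; auto|].
  intros i Hi. destruct (Nat.eq_dec i m) as [->|Hne].
  - eapply Hmon; [apply Rmax_r|auto].
  - eapply Hmon; [apply Rmax_l|apply HM; lia].
Qed.

Lemma finite_min_exists (P : nat -> R -> Prop) m :
  (forall j, (j < m)%nat -> exists δ, δ > 0 /\ forall δ', 0 < δ' <= δ -> P j δ') ->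
  exists δ, δ > 0 /\ forall j, (j < m)%nat -> forall δ', 0 < δ' <= δ -> P j δ'.
Proof.
  induction m as [|m IH]; intros H; [exists 1; split; [lra|]; intros; lia|].
  destruct IH as [d1 [Hd1 H1]]; [intros; apply H; lia|].
  destruct (H m ltac:(lia)) as [d2 [Hd2 H2]].
  exists (Rmin d1 d2). split; [apply Rmin_glb_lt; auto|].
  pose proof (Rmin_l d1 d2). pose proof (Rmin_r d1 d2).
  intros j Hj δ' Hδ'. destruct (Nat.eq_dec j m) as [->|Hne].
  - apply H2; lra.
  - apply H1; [lia|lra].
Qed.

Lemma bounded_nondecreasing_cauchy (f : R -> R) t1 M :
  (forall a b, t1 <= a <= b -> f a <= f b) -> (forall t, t1 <= t -> f t <= M) ->
  forall eta, eta > 0 ->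
  exists T, t1 <= T /\ forall t s, T <= t -> T <= s -> Rabs (f t - f s) < eta.
Proof.
  intros Hinc Hb eta He.
  set (E := fun y => exists t, t1 <= t /\ y = f t).
  destruct (completeness E) as [L [HL1 HL2]].
  { exists M; intros y [t [Ht ->]]; apply Hb; auto. }
  { exists (f t1), t1; split; [lra|reflexivity]. }
  assert (Hup : forall t, t1 <= t -> f t <= L) by (intros t Ht; apply HL1; exists t; auto).
  assert (HT : exists T, t1 <= T /\ L - eta < f T).
  { apply NNPP. intros Hnn. enough (L <= L - eta) by lra. apply HL2. intros y [t [Ht ->]].
    apply Rnot_lt_le. intros Hlt. apply Hnn. exists t; split; auto. }
  destruct HT as [T [HT1 HT2]]. exists T. split; [assumption|]. intros t s Ht Hs.
  pose proof (Hinc T t ltac:(lra)). pose proof (Hinc T s ltac:(lra)).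
  pose proof (Hup t ltac:(lra)). pose proof (Hup s ltac:(lra)).
  apply Rabs_def1; lra.
Qed.

Lemma Rabs_le_of_sqr_le x M : 0 <= M -> x * x <= M -> Rabs x <= M + 1.
Proof.
  intros HM Hx. destruct (Rle_dec (Rabs x) 1); [lra|].
  assert (Rabs x * Rabs x = x * x) by (rewrite <- Rabs_mult; apply Rabs_right; nra). nra.
Qed.

Lemma sumR_sqr_diff_le m a b B e :
  (forall j, (j < m)%nat -> Rabs (a j) <= B /\ Rabs (b j) <= B /\ Rabs (a j - b j) <= e) ->
  Rabs (sumR m (fun j => a j * a j) - sumR m (fun j => b j * b j)) <= INR m * (2 * B * e).
Proof.
  intros H. rewrite <- sumR_minus, <- sumR_const. eapply Rle_trans; [apply sumR_abs|].
  apply sumR_le. intros j Hj. destruct (H j Hj) as [Ha [Hb Hab]].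
  replace (a j * a j - b j * b j) with ((a j - b j) * (a j + b j)) by ring.
  rewrite Rabs_mult. pose proof (Rabs_triang (a j) (b j)).
  replace (2 * B * e) with (e * (2 * B)) by ring.
  apply Rmult_le_compat; try apply Rabs_pos; lra.
Qed.

(** * Absolutely continuous functions with nonpositive derivative *)

Definition null_set (Z : R -> Prop) : Prop :=
  forall eps, eps > 0 -> exists lo hi : nat -> R, (forall k, lo k <= hi k) /\
    (forall t, Z t -> exists k, lo k <= t <= hi k) /\
    (forall K, sumR K (fun k => hi k - lo k) <= eps).

Lemma null_set_of_nullD Z : nullD 1 (fun v => Z (v O)) -> null_set Z.
Proof.
  intros H eps He. destruct (H eps He) as [lo [hi [Hle [Hcov Hsum]]]].
  exists (fun k => lo k 0%nat), (fun k => hi k 0%nat). split; [intros; apply Hle|split].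
  - intros t Zt. destruct (Hcov (fun _ => t) Zt) as [k Hk]. exists k. apply Hk; lia.
  - intros K. specialize (Hsum K). simpl in Hsum.
    rewrite (sumR_ext K _ (fun k => hi k 0%nat - lo k 0%nat)) in Hsum; [assumption|].
    intros; ring.
Qed.

Definition overlap_len (a b L H : R) : R := Rmax 0 (Rmin b H - Rmax a L).

Ltac destruct_minmax :=
  unfold overlap_len, Rmax, Rmin in *;
  repeat match goal with
         | |- context [Rle_dec ?x ?y] => destruct (Rle_dec x y)
         | _ : context [Rle_dec ?x ?y] |- _ => destruct (Rle_dec x y)
         end; lra.

Section SortedIntervals.
Variables (m : nat) (al bl : nat -> R).
Hypothesis Hordered : forall i, (i < m)%nat -> al i <= bl i.
Hypothesis Hsorted : forall i, (S i < m)%nat -> bl i <= al (S i).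

Lemma overlap_len_sorted_prefix L H q : (S q <= m)%nat ->
  sumR (S q) (fun i => overlap_len (al i) (bl i) L H) <= Rmax 0 (Rmin (bl q) H - L).
Proof.
  induction q as [|q IH]; intros Hq; simpl.
  - assert (al 0%nat <= bl 0%nat) by (apply Hordered; lia). destruct_minmax.
  - simpl in IH. specialize (IH ltac:(lia)).
    assert (bl q <= al (S q)) by (apply Hsorted; lia).
    assert (al (S q) <= bl (S q)) by (apply Hordered; lia).
    assert (Rmax 0 (Rmin (bl q) H - L) + overlap_len (al (S q)) (bl (S q)) L H
            <= Rmax 0 (Rmin (bl (S q)) H - L)) by destruct_minmax.
    lra.
Qed.

Lemma overlap_len_sorted L H : L <= H ->
  sumR m (fun i => overlap_len (al i) (bl i) L H) <= H - L.
Proof.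
  intros HLH. destruct (Nat.eq_dec m 0) as [->|Hm]; [simpl; lra|].
  replace m with (S (m - 1)) by lia.
  pose proof (overlap_len_sorted_prefix L H (m - 1) ltac:(lia)). destruct_minmax.
Qed.

(* Sum the overlaps with each covering interval; by disjointness they add up to at most
   its length. *)
Lemma sorted_intervals_len_le_cover (Lk Hk : nat -> R) K :
  (forall k, Lk k <= Hk k) ->
  (forall i, (i < m)%nat -> exists k, (k < K)%nat /\ Lk k <= al i /\ bl i <= Hk k) ->
  sumR m (fun i => bl i - al i) <= sumR K (fun k => Hk k - Lk k).
Proof.
  intros HLH Hcov.
  apply Rle_trans with
    (sumR m (fun i => sumR K (fun k => overlap_len (al i) (bl i) (Lk k) (Hk k)))).
  - apply sumR_le. intros i Hi. destruct (Hcov i Hi) as [k [Hk1 [Hk2 Hk3]]].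
    assert (al i <= bl i) by auto.
    replace (bl i - al i) with (overlap_len (al i) (bl i) (Lk k) (Hk k)) by destruct_minmax.
    apply (sumR_term_le K (fun k => overlap_len (al i) (bl i) (Lk k) (Hk k))); auto.
    intros; destruct_minmax.
  - rewrite sumR_swap. apply sumR_le. intros k _. apply overlap_len_sorted; auto.
Qed.

End SortedIntervals.

Lemma derivable_pt_lim_slope_bound f x l e : derivable_pt_lim f x l -> e > 0 ->
  exists η, η > 0 /\
    (forall y, x <= y < x + η -> f y - f x <= (l + e) * (y - x)) /\
    (forall y, x - η < y <= x -> f x - f y <= (l + e) * (x - y)).
Proof.
  intros Hd He. destruct (Hd e He) as [δ Hδ]. exists δ. split; [apply cond_pos|].
  assert (Hq : forall y, y <> x -> Rabs (y - x) < δ ->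
            f y - f x = (f y - f x) / (y - x) * (y - x) /\ (f y - f x) / (y - x) - l < e).
  { intros y Hne Hy. split; [field; lra|].
    specialize (Hδ (y - x) ltac:(lra) Hy). replace (x + (y - x)) with y in Hδ by ring.
    apply Rabs_def2 in Hδ. lra. }
  split; intros y Hy; destruct (Req_dec y x) as [->|Hne]; try lra.
  - destruct (Hq y Hne ltac:(rewrite Rabs_right; lra)) as [E Hlt]. nra.
  - destruct (Hq y Hne ltac:(rewrite Rabs_left; lra)) as [E Hlt]. nra.
Qed.

Section CoveredIncrement.
Variables (g : R -> R) (a b eps : R) (Z : R -> Prop) (Lk Hk : nat -> R).
Hypothesis Heps : eps > 0.
Hypothesis Hab : a <= b.
Hypothesis Hder : forall t, a <= t <= b -> ~ Z t ->
  exists l, derivable_pt_lim g t l /\ l <= 0.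
Hypothesis HZcov : forall t, Z t -> exists k, Lk k < t < Hk k.

(* Up to slope [eps], the increment of [g] on [a, x] is carried by disjoint
   subintervals lying inside the open intervals covering the exceptional set. *)
Definition covered_increment (x : R) : Prop :=
  exists m al bl,
    (forall i, (i < m)%nat -> a <= al i /\ al i <= bl i /\ bl i <= x) /\
    (forall i, (S i < m)%nat -> bl i <= al (S i)) /\
    (forall i, (i < m)%nat -> exists k, Lk k < al i /\ bl i < Hk k) /\
    g x - g a <= eps * (x - a) + sumR m (fun i => Rabs (g (bl i) - g (al i))).

Lemma covered_increment_start : covered_increment a.
Proof.
  exists 0%nat, (fun _ => 0), (fun _ => 0). repeat split; intros; try lia. simpl; lra.
Qed.

Lemma covered_increment_slope x y : covered_increment x -> x <= y ->
  g y - g x <= eps * (y - x) -> covered_increment y.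
Proof.
  intros [m [al [bl [H1 [H2 [H3 H4]]]]]] Hxy Hg. exists m, al, bl.
  split; [|split; [|split]]; auto; [|lra].
  intros i Hi; destruct (H1 i Hi); lra.
Qed.

Lemma covered_increment_jump u y k : covered_increment u -> a <= u -> u <= y ->
  Lk k < u -> y < Hk k -> covered_increment y.
Proof.
  intros [m [al [bl [H1 [H2 [H3 H4]]]]]] Hau Huy HL HH.
  exists (S m), (fun i => if Nat.eqb i m then u else al i),
    (fun i => if Nat.eqb i m then y else bl i).
  split; [|split; [|split]].
  - intros i Hi. destruct (Nat.eqb_spec i m); [lra|]. destruct (H1 i ltac:(lia)); lra.
  - intros i Hi. destruct (Nat.eqb_spec i m); [lia|].
    destruct (Nat.eqb_spec (S i) m) as [<-|]; [destruct (H1 i ltac:(lia)); lra|].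
    apply H2; lia.
  - intros i Hi. destruct (Nat.eqb_spec i m); [exists k; lra|]. apply H3; lia.
  - simpl. rewrite Nat.eqb_refl.
    rewrite (sumR_ext m _ (fun i => Rabs (g (bl i) - g (al i)))).
    + assert (g y - g u <= Rabs (g y - g u)) by apply Rle_abs.
      assert (0 <= eps * (y - u)) by (apply Rmult_le_pos; lra). lra.
    + intros i Hi. destruct (Nat.eqb_spec i m); [lia|reflexivity].
Qed.

Lemma covered_increment_step x : a <= x <= b ->
  (forall y, a <= y < x -> covered_increment y) ->
  exists η, η > 0 /\ forall y, a <= y <= b -> y < x + η -> covered_increment y.
Proof.
  intros Hx Hbelow. destruct (classic (Z x)) as [Zx|nZx].
  - destruct (HZcov x Zx) as [k [hL hH]].
    exists (Hk k - x). split; [lra|].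
    pose proof (Rmax_l a ((Lk k + x) / 2)). pose proof (Rmax_r a ((Lk k + x) / 2)).
    set (u := Rmax a ((Lk k + x) / 2)) in *.
    assert (Hux : u <= x) by (apply Rmax_lub; lra).
    assert (Pu : covered_increment u).
    { destruct (Rlt_dec u x); [apply Hbelow; lra|].
      replace u with a by (unfold u in *; destruct_minmax). apply covered_increment_start. }
    intros y Hy Hyx. destruct (Rlt_dec y x); [apply Hbelow; lra|].
    apply (covered_increment_jump u y k); auto; lra.
  - destruct (Hder x Hx nZx) as [l [Hd Hl]].
    destruct (derivable_pt_lim_slope_bound g x l eps Hd Heps) as [η [Hη [Hright Hleft]]].
    assert (Px : covered_increment x).
    { destruct (Req_dec x a) as [->|Hne]; [apply covered_increment_start|].
      pose proof (Rmax_l a (x - η / 2)). pose proof (Rmax_r a (x - η / 2)).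
      set (u := Rmax a (x - η / 2)) in *.
      assert (Hux : u < x) by (unfold u in *; destruct_minmax).
      apply (covered_increment_slope u x); [apply Hbelow; lra|lra|].
      specialize (Hleft u ltac:(lra)). nra. }
    exists η. split; auto. intros y Hy Hyx. destruct (Rlt_dec y x); [apply Hbelow; lra|].
    apply (covered_increment_slope x y Px); [lra|]. specialize (Hright y ltac:(lra)). nra.
Qed.

Lemma covered_increment_end : covered_increment b.
Proof.
  set (A := fun x => a <= x <= b /\ forall y, a <= y <= x -> covered_increment y).
  assert (Aa : A a).
  { split; [lra|]. intros y Hy. replace y with a by lra. apply covered_increment_start. }
  destruct (completeness A) as [s [Hub Hlub]];
    [exists b; intros x [Hx _]; lra|exists a; exact Aa|].
  assert (Has : a <= s) by (apply Hub, Aa).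
  assert (Hsb : s <= b) by (apply Hlub; intros x [Hx _]; lra).
  assert (Hbelow : forall y, a <= y < s -> covered_increment y).
  { intros y Hy. apply NNPP. intros Hn. enough (s <= y) by lra.
    apply Hlub. intros x [Hx Hx2]. apply Rnot_gt_le. intros Hxy. apply Hn, Hx2; lra. }
  destruct (covered_increment_step s ltac:(lra) Hbelow) as [η [Hη Hstep]].
  destruct (Rlt_dec s b) as [Hsb'|]; [exfalso|apply Hstep; lra].
  pose proof (Rmin_l b (s + η / 2)). pose proof (Rmin_r b (s + η / 2)).
  set (y := Rmin b (s + η / 2)) in *.
  assert (s < y) by (unfold y in *; destruct_minmax).
  assert (A y) by (split; [lra|intros z Hz; apply Hstep; lra]).
  specialize (Hub y ltac:(assumption)). lra.
Qed.

End CoveredIncrement.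

Lemma geometric_sum_half K : sumR K (fun k => (/ 2) ^ k) = 2 - 2 * (/ 2) ^ K.
Proof. induction K as [|K IH]; simpl; [lra|]. rewrite IH. field. Qed.

(* Enlarging the k-th covering box by [δ/8 * 2^-k] makes the cover open at the price of
   [δ/2] of total length; the absolute continuity modulus then controls the covered part. *)
Lemma abs_cont_increment_le_eps g a b Z eps : a <= b -> null_set Z -> abs_cont g a b ->
  (forall t, a <= t <= b -> ~ Z t -> exists l, derivable_pt_lim g t l /\ l <= 0) ->
  eps > 0 -> g b - g a <= eps * (b - a) + eps.
Proof.
  intros Hab HZ HAC Hder Heps.
  destruct (HAC eps Heps) as [δ [Hδ Hac]].
  destruct (HZ (δ / 4) ltac:(lra)) as [lo [hi [Hlh [Hcov Hsum]]]].
  set (Lk := fun k => lo k - δ / 8 * (/ 2) ^ k).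
  set (Hk := fun k => hi k + δ / 8 * (/ 2) ^ k).
  assert (Hpow : forall k, 0 < (/ 2) ^ k) by (intros; apply pow_lt; lra).
  assert (HZcov : forall t, Z t -> exists k, Lk k < t < Hk k).
  { intros t Zt. destruct (Hcov t Zt) as [k Hk']. exists k. unfold Lk, Hk.
    specialize (Hpow k). nra. }
  destruct (covered_increment_end g a b eps Z Lk Hk Heps Hab Hder HZcov)
    as [m [al [bl [H1 [H2 [H3 H4]]]]]].
  destruct (finite_bound_exists (fun i k => Lk k < al i /\ bl i < Hk k) m H3) as [K HK].
  assert (Hlen : sumR m (fun i => bl i - al i) <= sumR K (fun k => Hk k - Lk k)).
  { apply sorted_intervals_len_le_cover.
    - intros i Hi; destruct (H1 i Hi); lra.
    - assumption.
    - intros k. unfold Lk, Hk. specialize (Hlh k). specialize (Hpow k). nra.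
    - intros i Hi. destruct (HK i Hi) as [k [Hk1 [Hk2 Hk3]]]. exists k; repeat split; auto; lra. }
  assert (HK2 : sumR K (fun k => Hk k - Lk k)
                = sumR K (fun k => hi k - lo k) + δ / 4 * sumR K (fun k => (/ 2) ^ k)).
  { unfold Hk, Lk. rewrite <- sumR_scal, <- sumR_plus. apply sumR_ext; intros; lra. }
  rewrite geometric_sum_half in HK2. specialize (Hsum K). specialize (Hpow K).
  assert (sumR m (fun i => Rabs (g (bl i) - g (al i))) < eps).
  { apply Hac; [intros i Hi; destruct (H1 i Hi); repeat split; lra|auto|nra]. }
  lra.
Qed.

Lemma abs_cont_nonincreasing g a b Z : a <= b -> null_set Z -> abs_cont g a b ->
  (forall t, a <= t <= b -> ~ Z t -> exists l, derivable_pt_lim g t l /\ l <= 0) ->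
  g b <= g a.
Proof.
  intros Hab HZ HAC Hder. apply Rnot_gt_le. intros Hgt.
  set (e := (g b - g a) / (b - a + 2)).
  assert (He : e * (b - a + 2) = g b - g a) by (unfold e; field; lra).
  assert (Hep : e > 0) by (unfold e; apply Rdiv_lt_0_compat; lra).
  pose proof (abs_cont_increment_le_eps g a b Z e Hab HZ HAC Hder Hep). nra.
Qed.

Lemma abs_cont_sub g t0 T a b : abs_cont g t0 T -> t0 <= a -> b <= T -> abs_cont g a b.
Proof.
  intros H Ha Hb eps He. destruct (H eps He) as [δ [Hδ Hd]]. exists δ; split; auto.
  intros m al bl H1 H2 H3. apply Hd; auto. intros k Hk; destruct (H1 k Hk); lra.
Qed.

Lemma abs_cont_ext f g a b :
  (forall t, a <= t <= b -> f t = g t) -> abs_cont f a b -> abs_cont g a b.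
Proof.
  intros He Hf eps Heps. destruct (Hf eps Heps) as [δ [Hδ H1]]. exists δ; split; auto.
  intros m al bl Ha Hs Hl. rewrite <- (sumR_ext m (fun k => Rabs (f (bl k) - f (al k)))); auto.
  intros k Hk. destruct (Ha k Hk). rewrite !He by lra; reflexivity.
Qed.

Lemma abs_cont_const c a b : abs_cont (fun _ => c) a b.
Proof.
  intros eps He. exists 1; split; [lra|]. intros m al bl _ _ _.
  rewrite (sumR_ext m _ (fun _ => 0)), sumR_zero; [lra|].
  intros; rewrite Rminus_diag; apply Rabs_R0.
Qed.

Lemma abs_cont_dominated h f g a b M : 0 <= M -> abs_cont f a b -> abs_cont g a b ->
  (forall x y, a <= x <= y -> y <= b ->
     Rabs (h y - h x) <= M * (Rabs (f y - f x) + Rabs (g y - g x))) ->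
  abs_cont h a b.
Proof.
  intros HM Hf Hg Hd eps He.
  set (e := eps / (2 * M + 2)).
  assert (Hep : e > 0) by (unfold e; apply Rdiv_lt_0_compat; lra).
  assert (Hee : e * (2 * M + 2) = eps) by (unfold e; field; lra).
  destruct (Hf e Hep) as [d1 [Hd1 H1]]. destruct (Hg e Hep) as [d2 [Hd2 H2]].
  exists (Rmin d1 d2). split; [apply Rmin_glb_lt; auto|].
  intros m al bl Ha Hs Hl. pose proof (Rmin_l d1 d2). pose proof (Rmin_r d1 d2).
  specialize (H1 m al bl Ha Hs ltac:(lra)). specialize (H2 m al bl Ha Hs ltac:(lra)).
  apply Rle_lt_trans with (M * (sumR m (fun k => Rabs (f (bl k) - f (al k)))
                                + sumR m (fun k => Rabs (g (bl k) - g (al k))))).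
  - rewrite <- sumR_plus, <- sumR_scal. apply sumR_le. intros k Hk. destruct (Ha k Hk). apply Hd; lra.
  - assert (M * (sumR m (fun k => Rabs (f (bl k) - f (al k)))
                 + sumR m (fun k => Rabs (g (bl k) - g (al k)))) <= M * (2 * e))
      by (apply Rmult_le_compat_l; lra).
    nra.
Qed.

Lemma abs_cont_plus f g a b :
  abs_cont f a b -> abs_cont g a b -> abs_cont (fun t => f t + g t) a b.
Proof.
  intros Hf Hg. apply (abs_cont_dominated _ f g a b 1); auto; [lra|].
  intros x y _ _. replace (f y + g y - (f x + g x)) with ((f y - f x) + (g y - g x)) by ring.
  rewrite Rmult_1_l. apply Rabs_triang.
Qed.

Lemma abs_cont_scal c f a b : abs_cont f a b -> abs_cont (fun t => c * f t) a b.
Proof.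
  intros Hf. apply (abs_cont_dominated _ f f a b (Rabs c)); auto; [apply Rabs_pos|].
  intros x y _ _. rewrite <- Rmult_minus_distr_l, Rabs_mult.
  assert (0 <= Rabs c) by apply Rabs_pos. assert (0 <= Rabs (f y - f x)) by apply Rabs_pos. nra.
Qed.

Lemma abs_cont_minus f g a b :
  abs_cont f a b -> abs_cont g a b -> abs_cont (fun t => f t - g t) a b.
Proof.
  intros Hf Hg. apply (abs_cont_ext (fun t => f t + -1 * g t)); [intros; ring|].
  apply abs_cont_plus, abs_cont_scal; assumption.
Qed.

Lemma abs_cont_sumR m f a b : (forall i, (i < m)%nat -> abs_cont (f i) a b) ->
  abs_cont (fun t => sumR m (fun i => f i t)) a b.
Proof.
  induction m as [|m IH]; intros H; simpl; [apply abs_cont_const|].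
  apply (abs_cont_plus (fun t => sumR m (fun i => f i t)) (f m)); [apply IH; intros|]; apply H; lia.
Qed.

Lemma abs_cont_id a b : abs_cont (fun t => t) a b.
Proof.
  intros eps He. exists eps; split; [lra|]. intros m al bl Ha _ Hs.
  rewrite (sumR_ext m _ (fun k => bl k - al k)); [lra|].
  intros k Hk; destruct (Ha k Hk); apply Rabs_right; lra.
Qed.

Lemma abs_cont_lipschitz g a b L : 0 <= L ->
  (forall x y, a <= x <= b -> a <= y <= b -> Rabs (g y - g x) <= L * Rabs (y - x)) ->
  abs_cont g a b.
Proof.
  intros HL Hl. apply (abs_cont_dominated g _ _ a b L HL (abs_cont_id a b) (abs_cont_id a b)).
  intros x y Hx Hy. specialize (Hl x y ltac:(lra) ltac:(lra)).
  assert (0 <= L * Rabs (y - x)) by (apply Rmult_le_pos; [lra|apply Rabs_pos]). lra.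
Qed.

Lemma abs_cont_bounded g a b : a <= b -> abs_cont g a b ->
  exists M, forall x, a <= x <= b -> Rabs (g x) <= M.
Proof.
  intros Hab Hg. destruct (Hg 1 ltac:(lra)) as [d [Hd H1]].
  assert (Hstep : forall x y, a <= y <= x -> x <= b -> x - y < d -> Rabs (g x - g y) < 1).
  { intros x y Hy Hx Hxy. specialize (H1 1%nat (fun _ => y) (fun _ => x)). simpl in H1.
    rewrite !Rplus_0_l in H1. apply H1; [intros; lra|intros; lia|lra]. }
  assert (Hind : forall N x, a <= x <= b -> x <= a + INR N * (d / 2) -> Rabs (g x - g a) <= INR N).
  { induction N as [|N IH]; intros x Hx Hxn.
    - simpl in Hxn. replace x with a by lra. rewrite Rminus_diag, Rabs_R0; simpl; lra.
    - rewrite S_INR in *. destruct (Rle_dec x (a + INR N * (d / 2))) as [Hle|Hgt];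
        [specialize (IH x Hx Hle); lra|].
      assert (0 <= INR N * (d / 2)) by (apply Rmult_le_pos; [apply pos_INR|lra]).
      pose (y := a + INR N * (d / 2)).
      assert (Ey : y = a + INR N * (d / 2)) by reflexivity.
      specialize (IH y ltac:(lra) ltac:(lra)).
      pose proof (Hstep x y ltac:(lra) ltac:(lra) ltac:(lra)).
      pose proof (Rabs_triang (g x - g y) (g y - g a)).
      replace (g x - g y + (g y - g a)) with (g x - g a) in * by ring. lra. }
  destruct (INR_unbounded ((b - a) / (d / 2))) as [N HN].
  exists (INR N + Rabs (g a)). intros x Hx.
  assert ((b - a) / (d / 2) * (d / 2) = b - a) by (field; lra).
  assert (Rabs (g x - g a) <= INR N) by (apply Hind; nra).
  pose proof (Rabs_triang (g x - g a) (g a)).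
  replace (g x - g a + g a) with (g x) in * by ring. lra.
Qed.

Lemma abs_cont_mult f g a b : a <= b -> abs_cont f a b -> abs_cont g a b ->
  abs_cont (fun t => f t * g t) a b.
Proof.
  intros Hab Hf Hg.
  destruct (abs_cont_bounded f a b Hab Hf) as [M1 HM1].
  destruct (abs_cont_bounded g a b Hab Hg) as [M2 HM2].
  assert (0 <= M1) by (eapply Rle_trans; [apply Rabs_pos|apply (HM1 a); lra]).
  assert (0 <= M2) by (eapply Rle_trans; [apply Rabs_pos|apply (HM2 a); lra]).
  apply (abs_cont_dominated _ f g a b (M1 + M2)); auto; [lra|].
  intros x y Hx Hy.
  replace (f y * g y - f x * g x) with (f y * (g y - g x) + g x * (f y - f x)) by ring.
  eapply Rle_trans; [apply Rabs_triang|]. rewrite !Rabs_mult.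
  specialize (HM1 y ltac:(lra)). specialize (HM2 x ltac:(lra)).
  pose proof (Rabs_pos (g y - g x)). pose proof (Rabs_pos (f y - f x)).
  pose proof (Rabs_pos (f y)). pose proof (Rabs_pos (g x)).
  assert (Rabs (f y) * Rabs (g y - g x) <= M1 * Rabs (g y - g x)) by (apply Rmult_le_compat_r; lra).
  assert (Rabs (g x) * Rabs (f y - f x) <= M2 * Rabs (f y - f x)) by (apply Rmult_le_compat_r; lra).
  nra.
Qed.

(* By the mean value theorem a C^1 function is Lipschitz on a compact interval. *)
Lemma abs_cont_C1 g g' a b : a <= b ->
  (forall t, derivable_pt_lim g t (g' t)) -> (forall t, continuity_pt g' t) -> abs_cont g a b.
Proof.
  intros Hab Hd Hc.
  destruct (continuity_ab_maj g' a b Hab (fun c _ => Hc c)) as [Mx [HMx _]].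
  destruct (continuity_ab_min g' a b Hab (fun c _ => Hc c)) as [mx [Hmx _]].
  set (M := Rabs (g' Mx) + Rabs (g' mx)).
  pose proof (Rabs_pos (g' Mx)). pose proof (Rabs_pos (g' mx)).
  assert (HM : forall c, a <= c <= b -> Rabs (g' c) <= M).
  { intros c Hc'. specialize (HMx c Hc'). specialize (Hmx c Hc').
    pose proof (Rle_abs (g' Mx)). pose proof (Rabs_le_between (g' mx) _ (Rle_refl _)).
    apply Rabs_le. unfold M. lra. }
  apply (abs_cont_lipschitz g a b M); [unfold M; lra|].
  assert (Hlt : forall x y, a <= x <= b -> a <= y <= b -> x < y ->
            Rabs (g y - g x) <= M * Rabs (y - x)).
  { intros x y Hx Hy Hxy. destruct (MVT_cor2 g g' x y Hxy (fun c _ => Hd c)) as [c [Hc1 Hc2]].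
    rewrite Hc1, Rabs_mult. apply Rmult_le_compat_r; [apply Rabs_pos|apply HM; lra]. }
  intros x y Hx Hy. destruct (Rtotal_order x y) as [Hxy|[->|Hxy]].
  - apply Hlt; auto.
  - rewrite !Rminus_diag, Rabs_R0. lra.
  - rewrite Rabs_minus_sym, (Rabs_minus_sym y x). apply Hlt; auto.
Qed.

Lemma abs_cont_constant g a b Z : a <= b -> null_set Z -> abs_cont g a b ->
  (forall t, a <= t <= b -> ~ Z t -> derivable_pt_lim g t 0) -> g b = g a.
Proof.
  intros Hab HZ HAC Hder. apply Rle_antisym.
  - apply (abs_cont_nonincreasing g a b Z); auto.
    intros t Ht nZ. exists 0. split; [apply Hder|]; auto; lra.
  - enough (-1 * g b <= -1 * g a) by lra.
    apply (abs_cont_nonincreasing (fun s => -1 * g s) a b Z Hab HZ (abs_cont_scal _ _ a b HAC)).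
    intros t Ht nZ. exists (-1 * 0). split; [|lra].
    apply (derivable_pt_lim_scal g (-1) t 0), Hder; assumption.
Qed.

Lemma derivable_pt_lim_sumR m (f : nat -> R -> R) d t :
  (forall i, (i < m)%nat -> derivable_pt_lim (f i) t (d i)) ->
  derivable_pt_lim (fun s => sumR m (fun i => f i s)) t (sumR m d).
Proof.
  induction m as [|m IH]; intros H; simpl; [apply derivable_pt_lim_const|].
  apply (derivable_pt_lim_plus (fun s => sumR m (fun i => f i s)) (f m));
    [apply IH; intros|]; apply H; lia.
Qed.

Lemma derivable_pt_lim_exp_scal g t :
  derivable_pt_lim (fun s => exp (g * s)) t (g * exp (g * t)).
Proof.
  replace (g * exp (g * t)) with (exp (g * t) * (g * 1)) by ring.
  apply (derivable_pt_lim_comp (fun s => g * s) exp).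
  - apply (derivable_pt_lim_scal id g t 1), derivable_pt_lim_id.
  - apply derivable_pt_lim_exp.
Qed.

Lemma abs_cont_exp_scal g a b : a <= b -> abs_cont (fun s => exp (g * s)) a b.
Proof.
  intros Hab. apply (abs_cont_C1 _ (fun s => g * exp (g * s))); auto.
  - intros; apply derivable_pt_lim_exp_scal.
  - intros t. apply (derivable_continuous_pt _ t
      (exist _ (g * (g * exp (g * t))) (derivable_pt_lim_scal _ g t _ (derivable_pt_lim_exp_scal g t)))).
Qed.

(** * Bounds on Filippov sets *)

Definition affine_functional (l : vec -> R) : Prop :=
  forall a b lam, l (fun k => lam * a k + (1 - lam) * b k) = lam * l a + (1 - lam) * l b.

Definition lipschitz_functional (D : nat) (l : vec -> R) (L : R) : Prop :=
  0 <= L /\ forall a b, Rabs (l a - l b) <= L * vdist D a b.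

Lemma nullD_empty D : (D > 0)%nat -> nullD D (fun _ => False).
Proof.
  intros HD eps He. exists (fun _ _ => 0), (fun _ _ => 0). split; [intros; lra|split].
  - intros v [].
  - intros K. rewrite (sumR_ext K _ (fun _ => 0)), sumR_zero; [lra|].
    intros i _. destruct D as [|D]; [lia|]. simpl. ring.
Qed.

(* The half-space [l <= M] is closed and convex, so it contains the Filippov set as
   soon as it contains the values of [f] near [w]. *)
Lemma filippov_set_le_of_ball D f w d l L M δ :
  (D > 0)%nat -> filippov_set D f w d -> δ > 0 ->
  affine_functional l -> lipschitz_functional D l L ->
  (forall v, vdist D v w < δ -> l (f v) <= M) -> l d <= M.
Proof.
  intros HD Hf Hd Hlin [HL Hlip] Hv.
  apply (Hf δ (fun _ => False) Hd (nullD_empty D HD) (fun c => l c <= M)).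
  - intros d' Happ. apply Rnot_gt_le. intros Hgt.
    set (e := (l d' - M) / (L + 1)).
    assert (He : e * (L + 1) = l d' - M) by (unfold e; field; lra).
    assert (Hep : e > 0) by (unfold e; apply Rdiv_lt_0_compat; lra).
    destruct (Happ e Hep) as [c [Hc Hcd]].
    specialize (Hlip d' c). rewrite vdist_sym in Hlip.
    assert (L * vdist D c d' <= L * e) by (apply Rmult_le_compat_l; lra).
    apply Rabs_le_between in Hlip. nra.
  - intros a b lam Ha Hb Hlam. rewrite Hlin. nra.
  - intros s [v [Hvd [_ ->]]]. apply Hv; assumption.
Qed.

Lemma filippov_set_le D f w d l L A B δ0 :
  (D > 0)%nat -> filippov_set D f w d -> δ0 > 0 -> 0 <= B ->
  affine_functional l -> lipschitz_functional D l L ->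
  (forall δ, 0 < δ <= δ0 -> forall v, vdist D v w < δ -> l (f v) <= A + B * δ) ->
  l d <= A.
Proof.
  intros HD Hf Hd0 HB Hlin Hlip Hv. apply Rnot_gt_le. intros Hgt.
  set (e := l d - A).
  set (δ := Rmin δ0 (e / (2 * (B + 1)))).
  assert (He2 : e / (2 * (B + 1)) > 0) by (apply Rdiv_lt_0_compat; unfold e; lra).
  assert (Hδ : 0 < δ <= δ0) by (split; [apply Rmin_glb_lt; lra|apply Rmin_l]).
  pose proof (filippov_set_le_of_ball D f w d l L (A + B * δ) δ HD Hf ltac:(lra)
                Hlin Hlip (Hv δ Hδ)).
  assert (δ <= e / (2 * (B + 1))) by apply Rmin_r.
  assert (e / (2 * (B + 1)) * (2 * (B + 1)) = e) by (field; lra).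
  assert (B * δ <= B * (e / (2 * (B + 1)))) by (apply Rmult_le_compat_l; lra).
  unfold e in *. nra.
Qed.

Definition lin_form (m : nat) (c : nat -> R) (g : nat -> nat) (d : vec) : R :=
  sumR m (fun i => c i * d (g i)).

Lemma lin_form_affine m c g : affine_functional (lin_form m c g).
Proof.
  intros a b lam. unfold lin_form.
  rewrite <- !sumR_scal, <- sumR_plus. apply sumR_ext; intros; ring.
Qed.

Lemma lin_form_lipschitz D m c g : (forall i, (i < m)%nat -> (g i < D)%nat) ->
  lipschitz_functional D (lin_form m c g) (sumR m (fun i => Rabs (c i))).
Proof.
  intros Hg. split; [apply sumR_nonneg; intros; apply Rabs_pos|].
  intros a b. unfold lin_form. rewrite <- sumR_minus. eapply Rle_trans; [apply sumR_abs|].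
  rewrite sumR_mult_r. apply sumR_le. intros i Hi.
  rewrite <- Rmult_minus_distr_l, Rabs_mult.
  apply Rmult_le_compat_l; [apply Rabs_pos|apply vdist_coord; auto].
Qed.

Lemma affine_functional_plus l1 l2 : affine_functional l1 -> affine_functional l2 ->
  affine_functional (fun d => l1 d + l2 d).
Proof. intros H1 H2 a b lam. rewrite H1, H2. ring. Qed.

Lemma lipschitz_functional_plus D l1 l2 L1 L2 :
  lipschitz_functional D l1 L1 -> lipschitz_functional D l2 L2 ->
  lipschitz_functional D (fun d => l1 d + l2 d) (L1 + L2).
Proof.
  intros [HL1 H1] [HL2 H2]. split; [lra|]. intros a b.
  specialize (H1 a b). specialize (H2 a b).
  replace (l1 a + l2 a - (l1 b + l2 b)) with ((l1 a - l1 b) + (l2 a - l2 b)) by ring.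
  eapply Rle_trans; [apply Rabs_triang|lra].
Qed.

Lemma affine_functional_opp l : affine_functional l -> affine_functional (fun d => - l d).
Proof. intros H a b lam. rewrite H. ring. Qed.

Lemma lipschitz_functional_opp D l L :
  lipschitz_functional D l L -> lipschitz_functional D (fun d => - l d) L.
Proof.
  intros [HL H]. split; [assumption|]. intros a b.
  replace (- l a - - l b) with (- (l a - l b)) by ring. rewrite Rabs_Ropp. apply H.
Qed.

Lemma filippov_set_eq D f w d l L k K :
  (D > 0)%nat -> filippov_set D f w d ->
  affine_functional l -> lipschitz_functional D l L -> lipschitz_functional D k K ->
  (forall v, l (f v) = k v) -> l d = k w.
Proof.
  intros HD Hf Hl HlL [HK Hk] Hlf.
  assert (Hnear : forall δ v, vdist D v w < δ -> Rabs (k v - k w) <= K * δ).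
  { intros δ v Hv. eapply Rle_trans; [apply Hk|]. apply Rmult_le_compat_l; lra. }
  apply Rle_antisym.
  - apply (filippov_set_le D f w d l L (k w) K 1 HD Hf ltac:(lra) HK Hl HlL).
    intros δ _ v Hv. rewrite Hlf. pose proof (Rabs_le_between _ _ (Hnear δ v Hv)). lra.
  - enough (- l d <= - k w) by lra.
    apply (filippov_set_le D f w d (fun x => - l x) L (- k w) K 1 HD Hf ltac:(lra) HK
             (affine_functional_opp l Hl) (lipschitz_functional_opp D l L HlL)).
    intros δ _ v Hv. rewrite Hlf. pose proof (Rabs_le_between _ _ (Hnear δ v Hv)). lra.
Qed.

Lemma sgnR_mul_near y y' : Rabs (y' - y) < Rabs y -> sgnR y' * y = Rabs y.
Proof.
  unfold sgnR, Rabs.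
  repeat match goal with |- context [Rlt_dec ?a ?b] => destruct (Rlt_dec a b) end;
  repeat destruct Rcase_abs; intros; lra.
Qed.

(* Away from the switching surface [sgnR yv = sgnR yw]; on it ([yw = 0]) the switched
   term vanishes and [|yv| <= 2 δ]. *)
Lemma sgn_gain_perturbation yw yv kw kv c δ :
  0 <= δ -> Rabs (kv - kw) <= δ -> Rabs (yv - yw) <= 2 * δ ->
  (yw = 0 \/ 2 * δ < Rabs yw) ->
  - (kv * sgnR yv * yw) + (kw - c) * Rabs yv
  <= - c * Rabs yw + δ * (Rabs yw + 2 * Rabs kw + 2 * Rabs c).
Proof.
  intros Hδ Hk Hy Hcases.
  assert (Hkc : forall u, Rabs u <= 2 * δ -> (kw - c) * u <= 2 * δ * (Rabs kw + Rabs c)).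
  { intros u Hu. eapply Rle_trans; [apply Rle_abs|]. rewrite Rabs_mult.
    pose proof (Rabs_triang kw (- c)). rewrite Rabs_Ropp in *. fold (kw - c) in *.
    apply Rle_trans with ((Rabs kw + Rabs c) * (2 * δ));
      [apply Rmult_le_compat; try apply Rabs_pos; lra|lra]. }
  pose proof (Rabs_pos yw). pose proof (Rabs_pos kw). pose proof (Rabs_pos c).
  destruct Hcases as [->|Hfar].
  - rewrite Rabs_R0, Rminus_0_r in *. pose proof (Hkc (Rabs yv) ltac:(rewrite Rabs_Rabsolu; lra)).
    nra.
  - rewrite Rmult_assoc, (sgnR_mul_near yw yv) by lra.
    pose proof (Rabs_le_between _ _ Hk).
    pose proof (Hkc (Rabs yv - Rabs yw)
                  ltac:(pose proof (Rabs_triang_inv2 yv yw); lra)).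
    assert ((kw - kv) * Rabs yw <= δ * Rabs yw) by (apply Rmult_le_compat_r; lra).
    nra.
Qed.

Lemma div_mod_mul_add a q r : (q < r)%nat -> ((a * r + q) / r = a /\ (a * r + q) mod r = q)%nat.
Proof.
  intros H. split.
  - symmetry; apply (Nat.div_unique _ _ _ q); lia.
  - symmetry; apply (Nat.mod_unique _ _ a); lia.
Qed.

Lemma sumR_eye r p h : (p < r)%nat -> sumR r (fun q => eye p q * h q) = h p.
Proof.
  intros Hp. rewrite <- (sumR_delta r p h Hp). apply sumR_ext. intros q _. unfold eye.
  destruct (Nat.eqb p q); ring.
Qed.

Lemma sumR_kron_eye m r p (c : nat -> R) h : (p < r)%nat ->
  sumR (m * r) (fun b => c (b / r)%nat * eye p (b mod r)%nat * h b)
  = sumR m (fun a => c a * h (a * r + p)%nat).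
Proof.
  intros Hp. rewrite sumR_split_mul. apply sumR_ext. intros a _.
  rewrite <- (sumR_eye r p (fun q => c a * h (a * r + q)%nat) Hp).
  apply sumR_ext. intros q Hq. destruct (div_mod_mul_add a q r Hq) as [-> ->]. ring.
Qed.

Lemma sumR_incidence_col n src dst j h :
  (src j < n)%nat -> (dst j < n)%nat -> src j <> dst j ->
  sumR n (fun i => incidence src dst i j * h i) = h (dst j) - h (src j).
Proof.
  intros Hs Hd Hne.
  rewrite <- (sumR_delta n (dst j) h Hd), <- (sumR_delta n (src j) h Hs), <- sumR_minus.
  apply sumR_ext. intros i _. unfold incidence.
  destruct (Nat.eqb_spec (dst j) i); destruct (Nat.eqb_spec (src j) i); try lia; ring.
Qed.

Section Incidence.
Variables (n ell : nat) (src dst : nat -> nat).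
Hypothesis Hedges : forall j, (j < ell)%nat ->
  (src j < n)%nat /\ (dst j < n)%nat /\ src j <> dst j.

Lemma sumR_incidence_row_zero (a : nat -> R) :
  sumR n (fun i => sumR ell (fun j => incidence src dst i j * a j)) = 0.
Proof.
  rewrite sumR_swap, (sumR_ext ell _ (fun _ => 0)); [apply sumR_zero|].
  intros j Hj. destruct (Hedges j Hj) as [Hs [Hd Hne]].
  rewrite (sumR_incidence_col n src dst j (fun _ => a j)); auto. ring.
Qed.

Lemma sumR_incidence_pairing (q a : nat -> R) :
  sumR n (fun i => q i * sumR ell (fun j => incidence src dst i j * a j))
  = sumR ell (fun j => a j * (q (dst j) - q (src j))).
Proof.
  rewrite (sumR_ext n _ (fun i => sumR ell (fun j => q i * (incidence src dst i j * a j))))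
    by (intros; rewrite <- sumR_scal; reflexivity).
  rewrite sumR_swap. apply sumR_ext. intros j Hj. destruct (Hedges j Hj) as [H1 [H2 H3]].
  rewrite (sumR_ext n _ (fun i => incidence src dst i j * (q i * a j))) by (intros; ring).
  rewrite (sumR_incidence_col n src dst j (fun i => q i * a j)); auto. ring.
Qed.

Variables (r : nat) (p : nat).
Hypothesis Hp : (p < r)%nat.

Lemma BTI_comp u j : (j < ell)%nat ->
  matvec (n * r) (BTI r src dst) u (j * r + p)%nat
  = u (dst j * r + p)%nat - u (src j * r + p)%nat.
Proof.
  intros Hj. destruct (Hedges j Hj) as [Hs [Hd Hne]].
  unfold matvec, BTI, kron, transpose; cbv beta.
  destruct (div_mod_mul_add j p r Hp) as [-> ->].
  rewrite (sumR_kron_eye n r p (fun i => incidence src dst i j) u Hp).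
  apply (sumR_incidence_col n src dst j (fun i => u (i * r + p)%nat)); auto.
Qed.

Variables (gamma : R) (phi : R -> vec).

Lemma est_u_comp t v i : (i < n)%nat ->
  est_u n r ell src dst phi t v (i * r + p)%nat =
  - sumR ell (fun j => incidence src dst i j *
       (v (n * r + (j * r + p))%nat * sgnR (est_y n r src dst phi t v (j * r + p)%nat))).
Proof.
  intros Hi. unfold est_u, matvec, BI, kron; cbv beta.
  destruct (div_mod_mul_add i p r Hp) as [-> ->]. f_equal.
  apply (sumR_kron_eye ell r p (fun j => incidence src dst i j)
           (fun b => v (n * r + b)%nat * sgnR (est_y n r src dst phi t v b)) Hp).
Qed.

Lemma est_field_z t v i : (i < n)%nat ->
  est_field n r ell src dst gamma phi t v (i * r + p)%nat
  = - gamma * v (i * r + p)%nat + est_u n r ell src dst phi t v (i * r + p)%nat.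
Proof.
  intros Hi. unfold est_field.
  replace (Nat.ltb (i * r + p) (n * r)) with true by (symmetry; apply Nat.ltb_lt; nia).
  reflexivity.
Qed.

Lemma est_field_kappa t v j : (j < ell)%nat ->
  est_field n r ell src dst gamma phi t v (n * r + (j * r + p))%nat
  = Rabs (est_y n r src dst phi t v (j * r + p)%nat).
Proof.
  intros Hj. unfold est_field.
  replace (Nat.ltb (n * r + (j * r + p)) (n * r)) with false by (symmetry; apply Nat.ltb_ge; nia).
  replace (Nat.ltb (n * r + (j * r + p)) (n * r + ell * r)) with true
    by (symmetry; apply Nat.ltb_lt; nia).
  do 2 f_equal. lia.
Qed.

Lemma xtilde_comp w t i : (i < n)%nat ->
  xtilde n r phi w t (i * r + p)%nat
  = w t (i * r + p)%nat + phi t (i * r + p)%nat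
    - / INR n * sumR n (fun i' => phi t (i' * r + p)%nat).
Proof.
  intros Hi. unfold xtilde. f_equal. unfold matvec, kron, ones; cbv beta.
  destruct (div_mod_mul_add i p r Hp) as [_ ->].
  rewrite (sumR_ext r _ (fun b => eye p b * phibar n r phi t b))
    by (intros b Hb; rewrite (Nat.mod_small b r Hb); ring).
  rewrite sumR_eye by assumption. unfold phibar, matvec, kron, ones. f_equal.
  rewrite (Nat.mod_small p r Hp), (sumR_kron_eye n r p (fun _ => 1) (fun b => phi t b) Hp).
  apply sumR_ext; intros; ring.
Qed.

End Incidence.

(** * Connectivity *)

Lemma reach_potential_bound ell src dst i k : reach ell src dst i k ->
  exists m : nat, forall f H,
    (forall e, (e < ell)%nat -> Rabs (f (dst e) - f (src e)) <= H) ->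
    Rabs (f k - f i) <= INR m * H.
Proof.
  induction 1 as [|j k e _ [m Hm] He Hsrc Hdst].
  - exists 0%nat. intros f H _. rewrite Rminus_diag, Rabs_R0; simpl; lra.
  - exists (S m). intros f H HH. specialize (Hm f H HH). specialize (HH e He).
    subst. rewrite S_INR.
    pose proof (Rabs_triang (f (dst e) - f (src e)) (f (src e) - f i)).
    replace (f (dst e) - f (src e) + (f (src e) - f i)) with (f (dst e) - f i) in * by ring.
    lra.
Qed.

Lemma connected_potential_bound n ell src dst :
  (forall i k, (i < n)%nat -> (k < n)%nat -> reach ell src dst i k) ->
  exists M, 0 <= M /\ forall i k, (i < n)%nat -> (k < n)%nat -> forall f H, 0 <= H ->
    (forall e, (e < ell)%nat -> Rabs (f (dst e) - f (src e)) <= H) ->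
    Rabs (f k - f i) <= M * H.
Proof.
  intros Hr.
  set (P := fun i k M => forall f H, 0 <= H ->
    (forall e, (e < ell)%nat -> Rabs (f (dst e) - f (src e)) <= H) -> Rabs (f k - f i) <= M * H).
  assert (Pmon : forall i k M M', M <= M' -> P i k M -> P i k M').
  { intros i k M M' HMM HP f H H0 He. specialize (HP f H H0 He).
    assert (M * H <= M' * H) by (apply Rmult_le_compat_r; lra). lra. }
  destruct (finite_max_exists (fun i M => forall k, (k < n)%nat -> P i k M) n)
    as [M [HM0 HM]].
  - intros i M M' HMM HQ k Hk. apply (Pmon i k M); auto.
  - intros i Hi. destruct (finite_max_exists (fun k M => P i k M) n) as [M [_ HM]].
    + intros k. apply Pmon.
    + intros k Hk. destruct (reach_potential_bound ell src dst i k (Hr i k Hi Hk)) as [m Hm].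
      exists (INR m). intros f H _ He. apply Hm; assumption.
    + exists M. assumption.
  - exists M; split; [assumption|]. intros i k Hi Hk. apply HM; assumption.
Qed.

Lemma Rabs_sub_mean_le n X i B : (n > 0)%nat ->
  (forall k, (k < n)%nat -> Rabs (X i - X k) <= B) -> Rabs (X i - / INR n * sumR n X) <= B.
Proof.
  intros Hn HB. assert (Hn' : INR n > 0) by (apply lt_0_INR; lia).
  replace (X i - / INR n * sumR n X) with (/ INR n * sumR n (fun k => X i - X k))
    by (rewrite sumR_minus, sumR_const; field; lra).
  rewrite Rabs_mult, Rabs_inv, (Rabs_right (INR n)) by lra.
  apply Rle_trans with (/ INR n * sumR n (fun _ => B)).
  - apply Rmult_le_compat_l; [left; apply Rinv_0_lt_compat; lra|].
    eapply Rle_trans; [apply sumR_abs|]. apply sumR_le; auto.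
  - rewrite sumR_const. right; field; lra.
Qed.

(* The centred vector X - mean(X) and the potential h have all pairwise differences
   controlled by their edge differences; subtracting h_0 uses that X - mean(X) sums to 0. *)
Lemma centered_pairing_bound n ell src dst : (n > 0)%nat ->
  (forall i k, (i < n)%nat -> (k < n)%nat -> reach ell src dst i k) ->
  exists C, 0 <= C /\ forall (X h : nat -> R) H, 0 <= H ->
    (forall e, (e < ell)%nat -> Rabs (h (dst e) - h (src e)) <= H) ->
    Rabs (sumR n (fun i => (X i - / INR n * sumR n X) * h i))
    <= C * H * sumR ell (fun j => Rabs (X (dst j) - X (src j))).
Proof.
  intros Hn Hr. destruct (connected_potential_bound n ell src dst Hr) as [M [HM0 HM]].
  exists (INR n * M * M). split; [pose proof (pos_INR n); apply Rmult_le_pos; [apply Rmult_le_pos|]; auto|].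
  intros X h H H0 Hh.
  set (S := sumR ell (fun j => Rabs (X (dst j) - X (src j)))).
  assert (HXe : forall e, (e < ell)%nat -> Rabs (X (dst e) - X (src e)) <= S).
  { intros e He. apply (sumR_term_le ell (fun j => Rabs (X (dst j) - X (src j)))); auto.
    intros; apply Rabs_pos. }
  assert (HS0 : 0 <= S) by (apply sumR_nonneg; intros; apply Rabs_pos).
  assert (Hn' : INR n > 0) by (apply lt_0_INR; lia).
  set (Xb := / INR n * sumR n X).
  assert (Hcentered : sumR n (fun i => (X i - Xb) * h 0%nat) = 0).
  { rewrite <- sumR_mult_r, sumR_minus, sumR_const. unfold Xb. field_simplify; lra. }
  replace (sumR n (fun i => (X i - Xb) * h i))
    with (sumR n (fun i => (X i - Xb) * (h i - h 0%nat))).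
  2: { rewrite (sumR_ext n _ (fun i => (X i - Xb) * h i - (X i - Xb) * h 0%nat))
         by (intros; ring).
       rewrite sumR_minus, Hcentered. ring. }
  eapply Rle_trans; [apply sumR_abs|].
  apply Rle_trans with (sumR n (fun _ => (M * S) * (M * H))).
  - apply sumR_le. intros i Hi. rewrite Rabs_mult.
    apply Rmult_le_compat; [apply Rabs_pos|apply Rabs_pos| |].
    + apply Rabs_sub_mean_le; [assumption|]. intros k Hk.
      rewrite Rabs_minus_sym. apply HM; auto.
    + apply (HM 0%nat i); auto; lia.
  - rewrite sumR_const. right; ring.
Qed.

Section Estimator.
Variables (n r ell : nat) (src dst : nat -> nat) (phi phi' : R -> vec) (gamma t0 : R)
  (w : R -> vec).
Hypothesis Hedges : forall j, (j < ell)%nat ->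
  (src j < n)%nat /\ (dst j < n)%nat /\ src j <> dst j.
Hypothesis Hphid : forall k t, (k < n * r)%nat ->
  derivable_pt_lim (fun s => phi s k) t (phi' t k).
Hypothesis Hphic : forall k t, (k < n * r)%nat -> continuity_pt (fun s => phi' s k) t.
Hypothesis Hgamma : gamma > 0.
Hypothesis Ht0 : 0 <= t0.
Hypothesis Hac : forall T, T > t0 -> forall k, (k < n * r + ell * r)%nat ->
  abs_cont (fun s => w s k) t0 T.
Variable Z : R -> Prop.
Hypothesis HZ : null_set Z.
Hypothesis Hder : forall t, t > t0 -> ~ Z t -> exists d : vec,
  (forall k, (k < n * r + ell * r)%nat -> derivable_pt_lim (fun s => w s k) t (d k)) /\
  filippov_set (n * r + ell * r) (est_field n r ell src dst gamma phi t) (w t) d.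
Variable p : nat.
Hypothesis Hp : (p < r)%nat.
Hypothesis Hn : (n > 0)%nat.

Local Notation D := (n * r + ell * r)%nat.
Local Notation F := (est_field n r ell src dst gamma phi).
(* Coordinate [p] of the blocks of [z] and of [kappa]. *)
Local Notation zi i := (i * r + p)%nat.
Local Notation ki j := (n * r + (j * r + p))%nat.

Lemma dim_pos : (D > 0)%nat.
Proof. nia. Qed.

Lemma z_index_lt i : (i < n)%nat -> (zi i < D)%nat.
Proof. intros; nia. Qed.

Lemma kappa_index_lt j : (j < ell)%nat -> (ki j < D)%nat.
Proof. intros; nia. Qed.

Lemma abs_cont_w a b k : t0 < a -> a <= b -> (k < D)%nat -> abs_cont (fun s => w s k) a b.
Proof. intros Ha Hab Hk. apply (abs_cont_sub _ t0 b); [apply Hac|..]; auto; lra. Qed.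

Definition zsum (s : R) : R := sumR n (fun i => w s (zi i)).

Lemma sumR_est_field_z t v :
  sumR n (fun i => F t v (zi i)) = - gamma * sumR n (fun i => v (zi i)).
Proof.
  rewrite (sumR_ext n _ (fun i => - gamma * v (zi i) + est_u n r ell src dst phi t v (zi i)))
    by (intros; apply est_field_z; auto).
  rewrite sumR_plus, sumR_scal.
  rewrite (sumR_ext n (fun i => est_u _ _ _ _ _ _ _ _ _) (fun i => -1 * sumR ell (fun j =>
    incidence src dst i j * (v (ki j) * sgnR (est_y n r src dst phi t v (zi j))))))
    by (intros; rewrite est_u_comp by auto; ring).
  rewrite sumR_scal, sumR_incidence_row_zero by assumption. ring.
Qed.

(* [1^T B = 0]: the discontinuous input does not move the sum of the estimates. *)
Lemma filippov_zsum_deriv t d : filippov_set D (F t) (w t) d ->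
  sumR n (fun i => d (zi i)) = - gamma * zsum t.
Proof.
  intros Hf.
  assert (Hidx : forall i, (i < n)%nat -> (zi i < D)%nat) by exact z_index_lt.
  pose proof (filippov_set_eq D (F t) (w t) d (lin_form n (fun _ => 1) (fun i => zi i)) _
    (lin_form n (fun _ => - gamma) (fun i => zi i)) _ dim_pos Hf (lin_form_affine _ _ _)
    (lin_form_lipschitz D n _ _ Hidx) (lin_form_lipschitz D n _ _ Hidx)) as E.
  unfold lin_form, zsum in *.
  rewrite (sumR_ext n _ (fun i => d (zi i))) in E by (intros; ring).
  rewrite E.
  - rewrite sumR_scal. reflexivity.
  - intros v. rewrite (sumR_ext n _ (fun i => F t v (zi i))) by (intros; ring).
    rewrite sumR_est_field_z, sumR_scal. reflexivity.
Qed.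

Lemma abs_cont_zsum a b : t0 < a -> a <= b -> abs_cont zsum a b.
Proof.
  intros Ha Hab. apply (abs_cont_sumR n (fun i s => w s (zi i))).
  intros i Hi. apply abs_cont_w; auto. apply z_index_lt; assumption.
Qed.

Lemma exp_zsum_constant a b : t0 < a -> a <= b ->
  exp (gamma * b) * zsum b = exp (gamma * a) * zsum a.
Proof.
  intros Ha Hab.
  apply (abs_cont_constant (fun s => exp (gamma * s) * zsum s) a b Z Hab HZ).
  - apply abs_cont_mult; auto; [apply abs_cont_exp_scal|apply abs_cont_zsum]; auto.
  - intros t Ht nZ. destruct (Hder t ltac:(lra) nZ) as [d [Hdd Hf]].
    replace 0 with (gamma * exp (gamma * t) * zsum t
                    + exp (gamma * t) * sumR n (fun i => d (zi i)))
      by (rewrite (filippov_zsum_deriv t d Hf); ring).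
    apply (derivable_pt_lim_mult (fun s => exp (gamma * s)) zsum);
      [apply derivable_pt_lim_exp_scal|].
    apply (derivable_pt_lim_sumR n (fun i s => w s (zi i))).
    intros i Hi. apply Hdd, z_index_lt; assumption.
Qed.

Lemma zsum_vanishes eps : eps > 0 -> exists T, forall t, t >= T -> Rabs (zsum t) < eps.
Proof.
  intros He. set (t1 := t0 + 1). set (G := exp (gamma * t1) * zsum t1).
  exists (Rmax t1 (Rabs G / (gamma * eps))). intros t Ht.
  pose proof (Rmax_l t1 (Rabs G / (gamma * eps))). pose proof (Rmax_r t1 (Rabs G / (gamma * eps))).
  assert (HG := exp_zsum_constant t1 t ltac:(unfold t1; lra) ltac:(lra)). fold G in HG.
  assert (He1 : 1 + gamma * t < exp (gamma * t)) by (apply exp_ineq1; unfold t1 in *; nra).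
  assert (Hep : 0 < exp (gamma * t)) by apply exp_pos.
  assert (Hz : zsum t = G / exp (gamma * t)) by (rewrite <- HG; field; lra).
  rewrite Hz. unfold Rdiv. rewrite Rabs_mult, Rabs_inv, (Rabs_right (exp _)) by lra.
  assert (Rabs G <= gamma * eps * t).
  { assert (Rabs G / (gamma * eps) * (gamma * eps) = Rabs G) by (field; lra).
    assert (0 < gamma * eps) by nra. nra. }
  apply (Rmult_lt_reg_r (exp (gamma * t))); auto. rewrite Rmult_assoc, Rinv_l by lra.
  pose proof (Rabs_pos G). unfold t1 in *. nra.
Qed.

(** ** The Lyapunov function *)

Variables vphi dvphi : R.
Hypothesis Hvphi : 0 <= vphi.
Hypothesis Hdvphi : 0 <= dvphi.
Hypothesis HA2 : forall t, 0 <= t -> forall a, (a < ell * r)%nat ->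
  Rabs (matvec (n * r) (BTI r src dst) (phi t) a) <= vphi /\
  Rabs (matvec (n * r) (BTI r src dst) (phi' t) a) <= dvphi.
Variable C : R.
Hypothesis HC : forall (X h : nat -> R) H, 0 <= H ->
  (forall e, (e < ell)%nat -> Rabs (h (dst e) - h (src e)) <= H) ->
  Rabs (sumR n (fun i => (X i - / INR n * sumR n X) * h i))
  <= C * H * sumR ell (fun j => Rabs (X (dst j) - X (src j))).

(* The level the gains have to exceed: it dominates the drift of the references. *)
Let c : R := C * (gamma * vphi + dvphi).

Definition xv (s : R) (v : vec) (i : nat) : R := v (zi i) + phi s (zi i).
Definition ydiff (s : R) (v : vec) (j : nat) : R := xv s v (dst j) - xv s v (src j).
Definition Q (s : R) (i : nat) : R := xv s (w s) i - / INR n * sumR n (xv s (w s)).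
Definition kappa (s : R) (j : nat) : R := w s (ki j).
Definition disagreement (s : R) : R := sumR n (fun i => Q s i * Q s i).
Definition lyap (s : R) : R :=
  / 2 * disagreement s + / 2 * sumR ell (fun j => (kappa s j - c) * (kappa s j - c)).

Lemma est_y_comp s v j : (j < ell)%nat -> est_y n r src dst phi s v (zi j) = ydiff s v j.
Proof. intros Hj. apply (BTI_comp n ell src dst Hedges r p Hp (fun k => v k + phi s k) j Hj). Qed.

Lemma sumR_Q_mul_shift s (a : nat -> R) b :
  sumR n (fun i => Q s i * (a i + b)) = sumR n (fun i => Q s i * a i).
Proof.
  rewrite (sumR_ext n _ (fun i => Q s i * a i + b * Q s i)) by (intros; ring).
  rewrite sumR_plus, sumR_scal. unfold Q.
  rewrite sumR_minus, sumR_const. assert (INR n > 0) by (apply lt_0_INR; lia).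
  field_simplify; lra.
Qed.

Lemma kappa_deriv_nonneg t d j : (j < ell)%nat -> filippov_set D (F t) (w t) d ->
  0 <= d (ki j).
Proof.
  intros Hj Hf.
  pose proof (filippov_set_le D (F t) (w t) d (lin_form 1 (fun _ => -1) (fun _ => ki j)) _ 0 0 1
    dim_pos Hf ltac:(lra) ltac:(lra) (lin_form_affine _ _ _)
    (lin_form_lipschitz D 1 _ _ (fun _ _ => kappa_index_lt j Hj))) as H.
  unfold lin_form in H; simpl in H. enough (0 + -1 * d (ki j) <= 0) by lra.
  apply H. intros δ _ v _. rewrite est_field_kappa by auto.
  pose proof (Rabs_pos (est_y n r src dst phi t v (zi j))). lra.
Qed.

Lemma lin_form_Q_field t v : lin_form n (Q t) (fun i => zi i) (F t v)
  = - gamma * sumR n (fun i => Q t i * v (zi i))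
    - sumR ell (fun j => v (ki j) * sgnR (ydiff t v j) * ydiff t (w t) j).
Proof.
  unfold lin_form.
  rewrite (sumR_ext n _ (fun i => - gamma * (Q t i * v (zi i)) + -1 * (Q t i *
     sumR ell (fun j => incidence src dst i j * (v (ki j) * sgnR (ydiff t v j))))));
    [rewrite sumR_plus, !sumR_scal, sumR_incidence_pairing by assumption|].
  - rewrite (sumR_ext ell _ (fun j => v (ki j) * sgnR (ydiff t v j) * ydiff t (w t) j));
      [ring|].
    intros j Hj. unfold ydiff, Q. ring.
  - intros i Hi. rewrite est_field_z, est_u_comp by assumption.
    rewrite (sumR_ext ell (fun j => incidence src dst i j * _)
      (fun j => incidence src dst i j * (v (ki j) * sgnR (ydiff t v j))));
      [ring|intros j Hj; rewrite est_y_comp by assumption; reflexivity].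
Qed.

Lemma lin_form_kappa_field t v :
  lin_form ell (fun j => kappa t j - c) (fun j => ki j) (F t v)
  = sumR ell (fun j => (kappa t j - c) * Rabs (ydiff t v j)).
Proof.
  apply sumR_ext. intros j Hj. rewrite est_field_kappa, est_y_comp by assumption. reflexivity.
Qed.

Lemma damping_term_near t v δ : (forall k, (k < D)%nat -> Rabs (v k - w t k) <= δ) ->
  sumR n (fun i => Q t i * w t (zi i)) - sumR n (fun i => Q t i * v (zi i))
  <= sumR n (fun i => Rabs (Q t i)) * δ.
Proof.
  intros Hcoord. rewrite sumR_mult_r, <- sumR_minus. apply sumR_le. intros i Hi.
  pose proof (Hcoord _ (z_index_lt i Hi)).
  assert (Rabs (Q t i * (w t (zi i) - v (zi i))) <= Rabs (Q t i) * δ)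
    by (rewrite Rabs_mult, Rabs_minus_sym; apply Rmult_le_compat_l; [apply Rabs_pos|assumption]).
  pose proof (Rle_abs (Q t i * (w t (zi i) - v (zi i)))). nra.
Qed.

Lemma switched_terms_near t v δ : 0 <= δ ->
  (forall k, (k < D)%nat -> Rabs (v k - w t k) <= δ) ->
  (forall j, (j < ell)%nat -> ydiff t (w t) j = 0 \/ 2 * δ < Rabs (ydiff t (w t) j)) ->
  - sumR ell (fun j => v (ki j) * sgnR (ydiff t v j) * ydiff t (w t) j)
  + sumR ell (fun j => (kappa t j - c) * Rabs (ydiff t v j))
  <= - c * sumR ell (fun j => Rabs (ydiff t (w t) j))
     + δ * sumR ell (fun j => Rabs (ydiff t (w t) j) + 2 * Rabs (kappa t j) + 2 * Rabs c).
Proof.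
  intros Hδ Hcoord Hfar. rewrite <- !sumR_scal, sumR_opp, <- !sumR_plus.
  apply sumR_le. intros j Hj. destruct (Hedges j Hj) as [Hs [Hd Hne]].
  assert (Hy : Rabs (ydiff t v j - ydiff t (w t) j) <= 2 * δ).
  { unfold ydiff, xv.
    pose proof (Rabs_le_between _ _ (Hcoord _ (z_index_lt _ Hd))).
    pose proof (Rabs_le_between _ _ (Hcoord _ (z_index_lt _ Hs))).
    apply Rabs_le. lra. }
  pose proof (sgn_gain_perturbation (ydiff t (w t) j) (ydiff t v j) (kappa t j) (v (ki j)) c δ
    Hδ (Hcoord _ (kappa_index_lt j Hj)) Hy (Hfar j Hj)).
  lra.
Qed.

Lemma lyapunov_field_near t : exists δ0 B, δ0 > 0 /\ 0 <= B /\
  forall δ, 0 < δ <= δ0 -> forall v, vdist D v (w t) < δ ->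
    lin_form n (Q t) (fun i => zi i) (F t v)
    + lin_form ell (fun j => kappa t j - c) (fun j => ki j) (F t v)
    <= - gamma * sumR n (fun i => Q t i * w t (zi i))
       - c * sumR ell (fun j => Rabs (ydiff t (w t) j)) + B * δ.
Proof.
  destruct (finite_min_exists
    (fun j δ => ydiff t (w t) j = 0 \/ 2 * δ < Rabs (ydiff t (w t) j)) ell) as [δ0 [Hδ0 Hfar]].
  { intros j Hj. destruct (Req_dec (ydiff t (w t) j) 0) as [H0|H0].
    - exists 1. split; [lra|]. intros; left; assumption.
    - pose proof (Rabs_pos_lt _ H0). exists (Rabs (ydiff t (w t) j) / 4).
      split; [lra|]. intros; right; lra. }
  set (Bz := sumR n (fun i => Rabs (Q t i))).
  set (Bk := sumR ell (fun j => Rabs (ydiff t (w t) j) + 2 * Rabs (kappa t j) + 2 * Rabs c)).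
  assert (HBz : 0 <= Bz) by (apply sumR_nonneg; intros; apply Rabs_pos).
  assert (HBk : 0 <= Bk).
  { apply sumR_nonneg; intros. pose proof (Rabs_pos (ydiff t (w t) i)).
    pose proof (Rabs_pos (kappa t i)). pose proof (Rabs_pos c). lra. }
  exists δ0, (gamma * Bz + Bk). split; [assumption|split; [nra|]].
  intros δ Hδ v Hv. rewrite lin_form_Q_field, lin_form_kappa_field.
  assert (Hcoord : forall k, (k < D)%nat -> Rabs (v k - w t k) <= δ).
  { intros k Hk. pose proof (vdist_coord D v (w t) k Hk). lra. }
  pose proof (damping_term_near t v δ Hcoord).
  pose proof (switched_terms_near t v δ ltac:(lra) Hcoord (fun j Hj => Hfar j Hj δ Hδ)).
  unfold Bz, Bk in *. nra.
Qed.

Lemma filippov_lyapunov_bound t d : filippov_set D (F t) (w t) d ->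
  lin_form n (Q t) (fun i => zi i) d + lin_form ell (fun j => kappa t j - c) (fun j => ki j) d
  <= - gamma * sumR n (fun i => Q t i * w t (zi i))
     - c * sumR ell (fun j => Rabs (ydiff t (w t) j)).
Proof.
  intros Hf. destruct (lyapunov_field_near t) as [δ0 [B [Hδ0 [HB Hnear]]]].
  apply (filippov_set_le D (F t) (w t) d _ _ _ B δ0 dim_pos Hf Hδ0 HB
           (affine_functional_plus _ _ (lin_form_affine _ _ _) (lin_form_affine _ _ _))
           (lipschitz_functional_plus _ _ _ _ _
              (lin_form_lipschitz D n _ _ z_index_lt)
              (lin_form_lipschitz D ell _ _ kappa_index_lt))
           Hnear).
Qed.

(* Assumption (A2) bounds the edge differences of [gamma * phi + phi']. *)
Lemma reference_drift_bound t : 0 <= t ->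
  gamma * sumR n (fun i => Q t i * phi t (zi i)) + sumR n (fun i => Q t i * phi' t (zi i))
  <= c * sumR ell (fun j => Rabs (ydiff t (w t) j)).
Proof.
  intros Ht.
  assert (Hedge : forall e, (e < ell)%nat ->
    Rabs (gamma * phi t (zi (dst e)) + phi' t (zi (dst e))
          - (gamma * phi t (zi (src e)) + phi' t (zi (src e)))) <= gamma * vphi + dvphi).
  { intros e He. destruct (HA2 t Ht (zi e) ltac:(nia)) as [Hb Hb'].
    rewrite (BTI_comp n ell src dst Hedges r p Hp) in Hb, Hb' by assumption.
    replace (gamma * phi t (zi (dst e)) + phi' t (zi (dst e))
             - (gamma * phi t (zi (src e)) + phi' t (zi (src e))))
      with (gamma * (phi t (zi (dst e)) - phi t (zi (src e)))
            + (phi' t (zi (dst e)) - phi' t (zi (src e)))) by ring.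
    eapply Rle_trans; [apply Rabs_triang|]. rewrite Rabs_mult, (Rabs_right gamma) by lra.
    assert (gamma * Rabs (phi t (zi (dst e)) - phi t (zi (src e))) <= gamma * vphi)
      by (apply Rmult_le_compat_l; lra).
    lra. }
  pose proof (HC (xv t (w t)) (fun i => gamma * phi t (zi i) + phi' t (zi i))
    (gamma * vphi + dvphi) ltac:(nra) Hedge) as Hpair.
  rewrite <- sumR_scal, <- sumR_plus.
  rewrite (sumR_ext n _ (fun i => Q t i * (gamma * phi t (zi i) + phi' t (zi i))))
    by (intros; ring).
  pose proof (Rle_abs (sumR n (fun i => Q t i * (gamma * phi t (zi i) + phi' t (zi i))))).
  unfold c. exact (Rle_trans _ _ _ H Hpair).
Qed.

Lemma derivable_pt_lim_half_sumR_sqr m (f : nat -> R -> R) df t :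
  (forall i, (i < m)%nat -> derivable_pt_lim (f i) t (df i)) ->
  derivable_pt_lim (fun s => / 2 * sumR m (fun i => f i s * f i s)) t
    (sumR m (fun i => f i t * df i)).
Proof.
  intros H.
  replace (sumR m (fun i => f i t * df i))
    with (/ 2 * sumR m (fun i => df i * f i t + f i t * df i))
    by (rewrite <- sumR_scal; apply sumR_ext; intros; field).
  apply (derivable_pt_lim_scal (fun s => sumR m (fun i => f i s * f i s))).
  apply (derivable_pt_lim_sumR m (fun i s => f i s * f i s)). intros i Hi.
  apply (derivable_pt_lim_mult (f i) (f i)); apply H; assumption.
Qed.

Lemma lyapunov_derivable t d :
  (forall k, (k < D)%nat -> derivable_pt_lim (fun s => w s k) t (d k)) ->
  derivable_pt_lim lyap t
    (lin_form n (Q t) (fun i => zi i) d + sumR n (fun i => Q t i * phi' t (zi i))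
     + lin_form ell (fun j => kappa t j - c) (fun j => ki j) d).
Proof.
  intros Hdd.
  set (dx := fun i => d (zi i) + phi' t (zi i)).
  assert (Hdx : forall i, (i < n)%nat -> derivable_pt_lim (fun s => xv s (w s) i) t (dx i)).
  { intros i Hi. apply (derivable_pt_lim_plus (fun s => w s (zi i)) (fun s => phi s (zi i))).
    - apply Hdd, z_index_lt; assumption.
    - apply Hphid. nia. }
  assert (HdQ : forall i, (i < n)%nat -> derivable_pt_lim (fun s => Q s i) t
                   (dx i + - (/ INR n * sumR n dx))).
  { intros i Hi. apply (derivable_pt_lim_minus (fun s => xv s (w s) i)
                          (fun s => / INR n * sumR n (xv s (w s)))); [auto|].
    apply (derivable_pt_lim_scal (fun s => sumR n (xv s (w s)))).
    apply (derivable_pt_lim_sumR n (fun i s => xv s (w s) i)). assumption. }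
  assert (Hdk : forall j, (j < ell)%nat ->
            derivable_pt_lim (fun s => kappa s j - c) t (d (ki j))).
  { intros j Hj. rewrite <- (Rminus_0_r (d (ki j))).
    apply (derivable_pt_lim_minus (fun s => kappa s j) (fun _ => c));
      [apply Hdd, kappa_index_lt; assumption|apply derivable_pt_lim_const]. }
  pose proof (derivable_pt_lim_plus _ _ t _ _
    (derivable_pt_lim_half_sumR_sqr n (fun i s => Q s i) _ t HdQ)
    (derivable_pt_lim_half_sumR_sqr ell (fun j s => kappa s j - c) _ t Hdk)) as H.
  cbv beta in H. rewrite sumR_Q_mul_shift in H. unfold lin_form, dx in *.
  rewrite (sumR_ext n _ (fun i => Q t i * d (zi i) + Q t i * phi' t (zi i))) in H
    by (intros; ring).
  rewrite sumR_plus in H. exact H.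
Qed.

Lemma lyapunov_deriv_le t : t > t0 -> ~ Z t ->
  exists l, derivable_pt_lim lyap t l /\ l <= - gamma * disagreement t.
Proof.
  intros Ht nZ. destruct (Hder t Ht nZ) as [d [Hdd Hf]].
  eexists; split; [apply (lyapunov_derivable t d Hdd)|].
  pose proof (filippov_lyapunov_bound t d Hf).
  pose proof (reference_drift_bound t ltac:(lra)).
  assert (sumR n (fun i => Q t i * w t (zi i))
          = disagreement t - sumR n (fun i => Q t i * phi t (zi i))).
  { unfold disagreement. rewrite <- sumR_minus.
    rewrite <- (sumR_Q_mul_shift t (fun i => w t (zi i)) (- / INR n * sumR n (xv t (w t)))).
    apply sumR_ext. intros i _. unfold Q at 2, xv. ring. }
  nra.
Qed.

Lemma abs_cont_lyap a b : t0 < a -> a <= b -> abs_cont lyap a b.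
Proof.
  intros Ha Hab.
  assert (Hx : forall i, (i < n)%nat -> abs_cont (fun s => xv s (w s) i) a b).
  { intros i Hi. apply (abs_cont_plus (fun s => w s (zi i)) (fun s => phi s (zi i))).
    - apply abs_cont_w, z_index_lt; assumption.
    - apply (abs_cont_C1 _ (fun s => phi' s (zi i))); auto; intros; [apply Hphid|apply Hphic]; nia. }
  assert (HQ : forall i, (i < n)%nat -> abs_cont (fun s => Q s i) a b).
  { intros i Hi. apply abs_cont_minus; [auto|].
    apply (abs_cont_scal _ (fun s => sumR n (xv s (w s)))).
    apply (abs_cont_sumR n (fun i s => xv s (w s) i)). assumption. }
  apply (abs_cont_plus (fun s => / 2 * disagreement s)
           (fun s => / 2 * sumR ell (fun j => (kappa s j - c) * (kappa s j - c))));
    apply abs_cont_scal; [apply (abs_cont_sumR n (fun i s => Q s i * Q s i))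
                         |apply (abs_cont_sumR ell (fun j s => (kappa s j - c) * (kappa s j - c)))];
    intros i Hi; apply abs_cont_mult; auto.
  all: apply abs_cont_minus; [apply abs_cont_w, kappa_index_lt; assumption|apply abs_cont_const].
Qed.

Lemma disagreement_nonneg s : 0 <= disagreement s.
Proof. apply sumR_nonneg. intros; apply Rle_0_sqr. Qed.

Lemma lyap_nonneg s : 0 <= lyap s.
Proof.
  pose proof (disagreement_nonneg s).
  assert (0 <= sumR ell (fun j => (kappa s j - c) * (kappa s j - c)))
    by (apply sumR_nonneg; intros; apply Rle_0_sqr).
  unfold lyap. lra.
Qed.

Lemma lyap_decrease a b eta : t0 < a -> a <= b ->
  (forall t, a <= t <= b -> eta <= disagreement t) -> lyap b <= lyap a - gamma * eta * (b - a).
Proof.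
  intros Ha Hab Hdis.
  enough (lyap b + gamma * eta * b <= lyap a + gamma * eta * a) by lra.
  apply (abs_cont_nonincreasing (fun s => lyap s + gamma * eta * s) a b Z Hab HZ).
  - apply abs_cont_plus; [apply abs_cont_lyap; assumption|apply abs_cont_scal, abs_cont_id].
  - intros t Ht nZ. destruct (lyapunov_deriv_le t ltac:(lra) nZ) as [l [Hl Hle]].
    exists (l + gamma * eta * 1). split.
    + apply (derivable_pt_lim_plus lyap (fun s => gamma * eta * s)); [assumption|].
      apply (derivable_pt_lim_scal id), derivable_pt_lim_id.
    + specialize (Hdis t Ht). nra.
Qed.

Lemma kappa_nondecreasing j a b : (j < ell)%nat -> t0 < a -> a <= b -> kappa a j <= kappa b j.
Proof.
  intros Hj Ha Hab. enough (-1 * kappa b j <= -1 * kappa a j) by lra.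
  apply (abs_cont_nonincreasing (fun s => -1 * kappa s j) a b Z Hab HZ).
  - apply abs_cont_scal, abs_cont_w, kappa_index_lt; assumption.
  - intros t Ht nZ. destruct (Hder t ltac:(lra) nZ) as [d [Hdd Hf]].
    exists (-1 * d (ki j)). split.
    + apply (derivable_pt_lim_scal (fun s => kappa s j)), Hdd, kappa_index_lt; assumption.
    + pose proof (kappa_deriv_nonneg t d j Hj Hf). lra.
Qed.

Lemma lyap_nonincreasing a b : t0 < a -> a <= b -> lyap b <= lyap a.
Proof.
  intros Ha Hab.
  pose proof (lyap_decrease a b 0 Ha Hab ltac:(intros; apply disagreement_nonneg)). lra.
Qed.

Lemma kappa_bounded t1 t j : t0 < t1 -> t1 <= t -> (j < ell)%nat ->
  Rabs (kappa t j - c) <= 2 * lyap t1 + 1.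
Proof.
  intros Ht1 Ht Hj. apply Rabs_le_of_sqr_le; [pose proof (lyap_nonneg t1); lra|].
  pose proof (sumR_term_le ell (fun j => (kappa t j - c) * (kappa t j - c)) j
                ltac:(intros; apply Rle_0_sqr) Hj). cbv beta in *.
  pose proof (disagreement_nonneg t). pose proof (lyap_nonincreasing t1 t Ht1 Ht).
  unfold lyap at 1 in H1. lra.
Qed.

(* [disagreement = 2 lyap - sum (kappa - c)^2] converges: [lyap] is nonincreasing and
   nonnegative, each gain is nondecreasing and bounded by [lyap]. *)
Lemma disagreement_cauchy eta : eta > 0 ->
  exists T, T > t0 /\ forall t s, T <= t -> T <= s -> Rabs (disagreement t - disagreement s) < eta.
Proof.
  intros He. set (t1 := t0 + 1). set (B := 2 * lyap t1 + 1).
  assert (HB : 0 <= B) by (pose proof (lyap_nonneg t1); unfold B; lra).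
  pose proof (pos_INR ell).
  set (eta' := eta / (3 + 2 * B * INR ell)).
  assert (He' : eta' > 0) by (unfold eta'; apply Rdiv_lt_0_compat; nra).
  assert (Hee : eta' * (3 + 2 * B * INR ell) = eta) by (unfold eta'; field; nra).
  destruct (bounded_nondecreasing_cauchy (fun s => - lyap s) t1 0) with (eta := eta')
    as [TV [HTV1 HTV]]; auto.
  { intros a b Hab. pose proof (lyap_nonincreasing a b ltac:(unfold t1 in *; lra) ltac:(lra)). lra. }
  { intros t _. pose proof (lyap_nonneg t). lra. }
  destruct (finite_max_exists (fun j T => t1 <= T /\
     forall t s, T <= t -> T <= s -> Rabs (kappa t j - kappa s j) < eta') ell) as [TK [_ HTK]].
  { intros j T T' HTT [H1 H2]. split; [lra|]. intros t s Ht Hs. apply H2; lra. }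
  { intros j Hj. destruct (bounded_nondecreasing_cauchy (fun s => kappa s j) t1 (c + B))
      with (eta := eta') as [T [HT1 HT2]]; auto.
    - intros a b Hab. apply kappa_nondecreasing; [assumption|unfold t1 in *; lra|lra].
    - intros t Ht. pose proof (Rabs_le_between _ _ (kappa_bounded t1 t j ltac:(unfold t1; lra) Ht Hj)).
      unfold B. lra.
    - exists T. split; assumption. }
  exists (Rmax TV (Rmax TK t1)).
  pose proof (Rmax_l TV (Rmax TK t1)). pose proof (Rmax_r TV (Rmax TK t1)).
  pose proof (Rmax_l TK t1). pose proof (Rmax_r TK t1).
  split; [unfold t1 in *; lra|]. intros t s Ht Hs.
  assert (Hsq : Rabs (sumR ell (fun j => (kappa t j - c) * (kappa t j - c))
                      - sumR ell (fun j => (kappa s j - c) * (kappa s j - c)))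
                <= INR ell * (2 * B * eta')).
  { apply (sumR_sqr_diff_le ell (fun j => kappa t j - c) (fun j => kappa s j - c)).
    intros j Hj. destruct (HTK j Hj) as [_ HT2].
    pose proof (HT2 t s ltac:(lra) ltac:(lra)).
    replace (kappa t j - c - (kappa s j - c)) with (kappa t j - kappa s j) by ring.
    split; [|split; [|lra]]; apply (kappa_bounded t1); auto; unfold t1 in *; lra. }
  pose proof (HTV t s ltac:(lra) ltac:(lra)) as Hlyapd.
  apply Rabs_def2 in Hlyapd. apply Rabs_le_between in Hsq.
  replace (disagreement t - disagreement s)
    with (2 * (lyap t - lyap s)
          - (sumR ell (fun j => (kappa t j - c) * (kappa t j - c))
             - sumR ell (fun j => (kappa s j - c) * (kappa s j - c))))
    by (unfold lyap; field).
  apply Rabs_def1; nra.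
Qed.

Lemma disagreement_vanishes eps : eps > 0 -> exists T, forall t, t >= T -> disagreement t < eps.
Proof.
  intros He. destruct (disagreement_cauchy (eps / 2) ltac:(lra)) as [T [HT HTc]].
  exists T. intros t Ht. apply Rnot_ge_lt. intros Hge.
  assert (Hall : forall s, T <= s -> eps / 2 <= disagreement s).
  { intros s Hs. pose proof (HTc s t Hs ltac:(lra)) as H. apply Rabs_def2 in H. lra. }
  set (Δ := 2 * (lyap T + 1) / (gamma * eps)).
  pose proof (lyap_nonneg T).
  assert (HΔ : Δ * (gamma * eps) = 2 * (lyap T + 1)) by (unfold Δ; field; nra).
  assert (HΔ0 : 0 <= Δ)
    by (unfold Δ; apply Rmult_le_pos; [lra|left; apply Rinv_0_lt_compat; nra]).
  pose proof (lyap_decrease T (T + Δ) (eps / 2) HT ltac:(lra) ltac:(intros; apply Hall; lra)).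
  pose proof (lyap_nonneg (T + Δ)). nra.
Qed.

Lemma xtilde_comp_vanishes i : (i < n)%nat -> forall eps, eps > 0 ->
  exists T, forall t, t >= T -> Rabs (xtilde n r phi w t (zi i)) < eps.
Proof.
  intros Hi eps He.
  destruct (disagreement_vanishes ((eps / 2) * (eps / 2)) ltac:(nra)) as [T1 HT1].
  destruct (zsum_vanishes (eps / 2) ltac:(lra)) as [T2 HT2].
  exists (Rmax T1 T2). intros t Ht. pose proof (Rmax_l T1 T2). pose proof (Rmax_r T1 T2).
  assert (Hn1 : INR n >= 1) by (apply Rle_ge, (le_INR 1); lia).
  rewrite (xtilde_comp n r p Hp phi w t i Hi).
  replace (w t (zi i) + phi t (zi i) - / INR n * sumR n (fun i' => phi t (zi i')))
    with (Q t i + / INR n * zsum t)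
    by (unfold Q, zsum, xv; rewrite sumR_plus; field; lra).
  pose proof (HT1 t ltac:(lra)). pose proof (HT2 t ltac:(lra)).
  assert (HQ : Q t i * Q t i <= disagreement t)
    by (apply (sumR_term_le n (fun i => Q t i * Q t i)); auto; intros; apply Rle_0_sqr).
  assert (HQa : Rabs (Q t i) < eps / 2).
  { apply Rnot_ge_lt. intros Hge.
    assert (Rabs (Q t i) * Rabs (Q t i) = Q t i * Q t i)
      by (rewrite <- Rabs_mult; apply Rabs_right, Rle_ge, Rle_0_sqr).
    nra. }
  assert (HZa : Rabs (/ INR n * zsum t) < eps / 2).
  { rewrite Rabs_mult, Rabs_inv, (Rabs_right (INR n)) by lra.
    assert (0 < / INR n <= 1)
      by (split; [apply Rinv_0_lt_compat; lra|rewrite <- Rinv_1; apply Rinv_le_contravar; lra]).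
    pose proof (Rabs_pos (zsum t)). nra. }
  eapply Rle_lt_trans; [apply Rabs_triang|lra].
Qed.
End Estimator.

Theorem theorem1 (n r ell : nat) (src dst : nat -> nat) (phi phi' : R -> nat -> R)
  (gamma t0 : R) (w : R -> nat -> R) :
  (* (A1) *)
  connected_undirected n ell src dst ->
  (* phi continuously differentiable, with derivative phi' *)
  (forall k t, (k < n * r)%nat -> derivable_pt_lim (fun s => phi s k) t (phi' t k)) ->
  (forall k t, (k < n * r)%nat -> continuity_pt (fun s => phi' s k) t) ->
  (* (A2) *)
  (exists vphi dvphi : R, forall t, 0 <= t -> forall a, (a < ell * r)%nat ->
      Rabs (matvec (n * r) (BTI r src dst) (phi t) a) <= vphi /\
      Rabs (matvec (n * r) (BTI r src dst) (phi' t) a) <= dvphi) ->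
  gamma > 0 -> 0 <= t0 ->
  (* kappa_j(t0) >= 1; z(t0) = z0 is arbitrary *)
  (forall j, (j < ell * r)%nat -> w t0 (n * r + j)%nat >= 1) ->
  filippov_solution (n * r + ell * r) (est_field n r ell src dst gamma phi) t0 w ->
  forall k, (k < n * r)%nat ->
    forall eps, eps > 0 -> exists T, forall t, t >= T -> Rabs (xtilde n r phi w t k) < eps.
Proof.
  intros [Hedges [_ [_ Hreach]]] Hphid Hphic [vphi [dvphi HA2]] Hgamma Ht0 _
    [Hac [Z [HZ Hder]]] k Hk.
  assert (Hr : (r > 0)%nat) by (destruct r; lia).
  assert (Hn : (n > 0)%nat) by (destruct n; lia).
  assert (HA2' : forall t, 0 <= t -> forall a, (a < ell * r)%nat ->
      Rabs (matvec (n * r) (BTI r src dst) (phi t) a) <= Rmax 0 vphi /\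
      Rabs (matvec (n * r) (BTI r src dst) (phi' t) a) <= Rmax 0 dvphi).
  { intros t Ht a Ha. destruct (HA2 t Ht a Ha).
    split; eapply Rle_trans; try eassumption; apply Rmax_r. }
  destruct (centered_pairing_bound n ell src dst Hn Hreach) as [C [_ HC]].
  rewrite (Nat.div_mod_eq k r), Nat.mul_comm.
  apply (xtilde_comp_vanishes n r ell src dst phi phi' gamma t0 w Hedges Hphid Hphic
           Hgamma Ht0 Hac Z (null_set_of_nullD Z HZ) Hder (k mod r)
           (Nat.mod_upper_bound k r ltac:(lia)) Hn _ _ (Rmax_l 0 vphi) (Rmax_l 0 dvphi)
           HA2' C HC (k / r)).
  apply Nat.Div0.div_lt_upper_bound; lia.
Qed.
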